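(* Let $\mathcal{B}_4$, $\pi_{\lambda,\mu}$ ($\lambda\neq0,\mu\in\mathbb{R}$), the group Fourier transform and the difference operators $\Delta_{x_i}$ be as in the context. Then for a suitable distribution $\kappa$ on $\mathcal{B}_4$ (e.g. $\kappa\in\mathcal{S}(\mathbb{R}^4)$), $$\Delta_{x_3}\hat\kappa(\pi_{\lambda,\mu})=\frac{i}{\lambda}\Big(\Delta_{x_2}\pi_{\lambda,\mu}(\kappa)\,\pi_{\lambda,\mu}(X_3)+\pi_{\lambda,\mu}(\kappa)\pi_{\lambda,\mu}(X_1)-\pi_{\lambda,\mu}(X_1)\pi_{\lambda,\mu}(\kappa)\Big),$$ where $\pi_{\lambda,\mu}(X_1)=\partial_u$, $\pi_{\lambda,\mu}(X_3)$ is multiplication by $-i\lambda u$, and $\Delta_{x_2}\pi_{\lambda,\mu}(\kappa)=\pi_{\lambda,\mu}(x_2\kappa)=\frac{2\lambda}{i}\partial_\mu\pi_{\lambda,\mu}(\kappa)$.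
   Context: The Engel group $\mathcal{B}_4$ is $\mathbb{R}^4$ with the law $(x_1,x_2,x_3,x_4)\circ(y_1,y_2,y_3,y_4)=(x_1+y_1,x_2+y_2,x_3+y_3-x_1y_2,x_4+y_4+\frac12x_1^2y_2-x_1y_3)$ and Haar measure the Lebesgue measure. Its left-invariant vector fields are $X_1=\partial_{x_1}$, $X_2=\partial_{x_2}-x_1\partial_{x_3}+\frac{x_1^2}{2}\partial_{x_4}$, $X_3=\partial_{x_3}-x_1\partial_{x_4}$, $X_4=\partial_{x_4}$. For $\lambda\neq0$, $\mu\in\mathbb{R}$, $\pi_{\lambda,\mu}(x)h(u)=\exp\big(i(-\frac{\mu}{2\lambda}x_2+\lambda x_4-\lambda x_3u+\frac{\lambda}{2}x_2u^2)\big)h(u+x_1)$ on $L^2(\mathbb{R})$. The group Fourier transform is $\hat\kappa(\pi_{\lambda,\mu})=\pi_{\lambda,\mu}(\kappa)=\int_{\mathcal{B}_4}\kappa(x)\pi_{\lambda,\mu}(x)^*dx$; explicitly $\pi_{\lambda,\mu}(\kappa)h(u)=\int_{\mathbb{R}^4}\kappa(x)\exp\big(i(\frac{\mu}{2\lambda}x_2-\lambda x_4+\lambda x_3(u-x_1)-\frac{\lambda}{2}x_2(u-x_1)^2)\big)h(u-x_1)\,dx$. The same symbol $\pi_{\lambda,\mu}$ denotes the infinitesimal representation: $\pi_{\lambda,\mu}(X_1)=\partial_u$, $\pi_{\lambda,\mu}(X_2)=\frac{i}{2}(\lambda u^2-\frac{\mu}{\lambda})$, $\pi_{\lambda,\mu}(X_3)=-i\lambda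 u$, $\pi_{\lambda,\mu}(X_4)=i\lambda$. The difference operators are defined by $\Delta_{x_i}\hat\kappa(\pi_{\lambda,\mu}):=\pi_{\lambda,\mu}(x_i\kappa)$, $i=1,\dots,4$. *)

From Stdlib Require Import Reals List.
From Coquelicot Require Import Coquelicot.
Open Scope R_scope.

Definition cexpi (t : R) : C := (cos t, sin t).

(* Functions on B_4 = R^4 are written curried: f x1 x2 x3 x4. *)
Definition fun4 (T : Type) := R -> R -> R -> R -> T.

(* Partial derivative in direction i (0,1,2,3 for x1,x2,x3,x4; larger i are
   treated as x4) of a real-valued function on R^4. *)
Definition pd (i : nat) (g : fun4 R) : fun4 R :=
  fun a b c d =>
    match i with
    | O => Derive (fun t => g t b c d) a
    | 1%nat => Derive (fun t => g a t c d) b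
    | 2%nat => Derive (fun t => g a b t d) c
    | _ => Derive (fun t => g a b c t) d
    end.

Definition ex_pd (i : nat) (g : fun4 R) (a b c d : R) : Prop :=
  match i with
  | O => ex_derive (fun t => g t b c d) a
  | 1%nat => ex_derive (fun t => g a t c d) b
  | 2%nat => ex_derive (fun t => g a b t d) c
  | _ => ex_derive (fun t => g a b c t) d
  end.

Definition iter_pd (ds : list nat) (g : fun4 R) : fun4 R := fold_right pd g ds.

Definition rapid4 (g : fun4 R) : Prop :=
  forall n : nat, exists M : R, forall a b c d : R,
    (1 + a^2 + b^2 + c^2 + d^2) ^ n * Rabs (g a b c d) <= M.

Definition schwartz4_R (g : fun4 R) : Prop :=
  forall ds : list nat,
    (forall i a b c d, ex_pd i (iter_pd ds g) a b c d) /\ rapid4 (iter_pd ds g).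

Definition schwartz4 (k : fun4 C) : Prop :=
  schwartz4_R (fun a b c d => fst (k a b c d)) /\
  schwartz4_R (fun a b c d => snd (k a b c d)).

Definition schwartz1_R (g : R -> R) : Prop :=
  forall n : nat,
    (forall x, ex_derive (Derive_n g n) x) /\
    exists M : R, forall x, (1 + x^2) ^ n * Rabs (Derive_n g n x) <= M.

Definition schwartz1 (h : R -> C) : Prop :=
  schwartz1_R (fun x => fst (h x)) /\ schwartz1_R (fun x => snd (h x)).

Definition Cderiv (f : R -> C) (u : R) : C :=
  (Derive (fun t => fst (f t)) u, Derive (fun t => snd (f t)) u).

Definition int_R (f : R -> C) : C :=
  @RInt_gen C_R_CompleteNormedModule f (Rbar_locally m_infty) (Rbar_locally p_infty).

(* group Fourier transform pi_{lam,mu}(kappa), acting on h : R -> C: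
   pi(kappa)h(u) = int_{R^4} kappa(x) exp(i(mu/(2lam) x2 - lam x4
                    + lam x3 (u-x1) - lam/2 x2 (u-x1)^2)) h(u-x1) dx *)
Definition piF (lam mu : R) (k : fun4 C) (h : R -> C) (u : R) : C :=
  int_R (fun x1 => int_R (fun x2 => int_R (fun x3 => int_R (fun x4 =>
    Cmult (Cmult (k x1 x2 x3 x4)
      (cexpi (mu / (2 * lam) * x2 - lam * x4 + lam * x3 * (u - x1)
              - lam / 2 * x2 * (u - x1) ^ 2)))
      (h (u - x1)))))).

Definition mulx (i : nat) (k : fun4 C) : fun4 C :=
  fun a b c d =>
    Cmult (RtoC (match i with 1%nat => a | 2%nat => b | 3%nat => c | _ => d end))
          (k a b c d).

Definition DeltaX (i : nat) (lam mu : R) (k : fun4 C) : (R -> C) -> (R -> C) :=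
  piF lam mu (mulx i k).

Definition piX1 (h : R -> C) : R -> C := Cderiv h.
Definition piX3 (lam : R) (h : R -> C) : R -> C :=
  fun u => Cmult (0, - lam * u) (h u).

(* Both identities come from differentiating under the integral sign in
     pi(kappa)h(u) = int kappa(x) e^{i theta(mu,u,x)} h(u - x1) dx,
   theta = mu/(2 lam) x2 - lam x4 + lam x3 (u - x1) - lam/2 x2 (u - x1)^2.
   Since d theta/d mu = x2/(2 lam), the mu-derivative is (i/(2 lam)) pi(x2 kappa)h;
   since d theta/d u = lam x3 - lam x2 (u - x1), the u-derivative is
   i lam pi(x3 kappa)h + pi(x2 kappa)(pi(X3)h) + pi(kappa)(h'), and both
   identities follow by algebra.
   Differentiation under the four improper integrals is justified by bounding
   the first-order Taylor remainder of the integrand in the parameter by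
   (p - q)^2 times prod_j 1/(1 + x_j^2), uniformly near the base point: kappa
   and its first derivatives decay faster than any power of 1 + |x|^2, while
   the phase factor, h and their parameter derivatives grow at most
   polynomially.  Integrating such a bound in one variable costs a factor PI
   and removes one Cauchy weight. *)

From Stdlib Require Import Reals List Lra Lia FunctionalExtensionality.
From Coquelicot Require Import Coquelicot.
Open Scope R_scope.

Lemma Rabs_diff_le_of_derive (f df : R -> R) a b K :
  (forall c, is_derive f c (df c)) -> (forall c, Rabs (df c) <= K) ->
  Rabs (f b - f a) <= K * Rabs (b - a).
Proof.
  intros Hd Hb.
  destruct (MVT_cor4 f df a (Rabs (b - a)) (fun c _ => Hd c) b (Rle_refl _)) as [c [Hc _]].
  rewrite Hc, Rabs_mult. apply Rmult_le_compat_r; [apply Rabs_pos | apply Hb].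
Qed.

Lemma Rabs_taylor_remainder_le (f f' f'' : R -> R) a b K :
  (forall c, is_derive f c (f' c)) -> (forall c, is_derive f' c (f'' c)) ->
  (forall c, Rabs (f'' c) <= K) ->
  Rabs (f b - f a - (b - a) * f' a) <= K * (b - a) ^ 2.
Proof.
  intros H1 H2 H3.
  assert (Hd : forall c, is_derive (fun s => f s - (s - a) * f' a) c (f' c - f' a)).
  { intros c. auto_derive; [now exists (f' c)|].
    replace (Derive (fun x => f x) c) with (f' c) by (symmetry; apply is_derive_unique, H1). ring. }
  destruct (MVT_cor4 _ _ a (Rabs (b - a)) (fun c _ => Hd c) b (Rle_refl _)) as [c [Hc Hca]].
  replace (f b - f a - (b - a) * f' a)
    with ((f b - (b - a) * f' a) - (f a - (a - a) * f' a)) by ring.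
  rewrite Hc, Rabs_mult.
  pose proof (Rabs_diff_le_of_derive f' f'' a c K H2 H3).
  assert (0 <= K) by (pose proof (H3 0); pose proof (Rabs_pos (f'' 0)); lra).
  rewrite <- (pow2_abs (b - a)).
  pose proof (Rabs_pos (f' c - f' a)). pose proof (Rabs_pos (b - a)). pose proof (Rabs_pos (c - a)).
  assert (Rabs (f' c - f' a) <= K * Rabs (b - a)) by (eapply Rle_trans; [eassumption | nra]).
  simpl. nra.
Qed.

Lemma is_derive_of_taylor_remainder (f : R -> R) p0 l M :
  (forall p, Rabs (p - p0) < 1 -> Rabs (f p - f p0 - (p - p0) * l) <= M * (p - p0) ^ 2) ->
  is_derive f p0 l.
Proof.
  intros H. apply is_derive_Reals. intros eps Heps.
  assert (HM : 0 < Rabs M + 1) by (pose proof (Rabs_pos M); lra).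
  assert (Hd : 0 < Rmin 1 (eps / (Rabs M + 1)))
    by (apply Rmin_glb_lt; [lra | now apply Rdiv_lt_0_compat]).
  exists (mkposreal _ Hd). intros d Hd0 Hdlt. simpl in Hdlt.
  pose proof (Rmin_l 1 (eps / (Rabs M + 1))). pose proof (Rmin_r 1 (eps / (Rabs M + 1))).
  specialize (H (p0 + d)). replace (p0 + d - p0) with d in H by ring.
  specialize (H ltac:(lra)).
  replace ((f (p0 + d) - f p0) / d - l) with ((f (p0 + d) - f p0 - d * l) / d) by (field; auto).
  assert (Hpos : 0 < Rabs d) by now apply Rabs_pos_lt.
  unfold Rdiv. rewrite Rabs_mult, Rabs_inv.
  apply (Rmult_lt_reg_r (Rabs d)); [exact Hpos|].
  rewrite Rmult_assoc, Rinv_l, Rmult_1_r by lra.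
  eapply Rle_lt_trans; [exact H|]. rewrite <- (pow2_abs d).
  assert (Hsmall : Rabs d * (Rabs M + 1) < eps).
  { apply (Rlt_le_trans _ (eps / (Rabs M + 1) * (Rabs M + 1))).
    - apply Rmult_lt_compat_r; lra.
    - right; field; lra. }
  pose proof (Rle_abs M). nra.
Qed.

Lemma Cmod_le_Rabs_sum (z : C) : Cmod z <= Rabs (fst z) + Rabs (snd z).
Proof.
  destruct z as [a b]. unfold Cmod; simpl.
  pose proof (Rabs_pos a). pose proof (Rabs_pos b).
  rewrite <- (sqrt_Rsqr (Rabs a + Rabs b)) by lra.
  apply sqrt_le_1_alt. unfold Rsqr.
  assert (Ha : a * a = Rabs a * Rabs a) by (rewrite <- Rabs_mult, Rabs_pos_eq; nra).
  assert (Hb : b * b = Rabs b * Rabs b) by (rewrite <- Rabs_mult, Rabs_pos_eq; nra).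
  rewrite !Rmult_1_r, Ha, Hb. nra.
Qed.

Lemma Cmod_minus_le_Rabs_sum (a b : C) :
  Cmod (Cminus a b) <= Rabs (fst a - fst b) + Rabs (snd a - snd b).
Proof. eapply Rle_trans; [apply Cmod_le_Rabs_sum|]. simpl. unfold Rminus. lra. Qed.

Lemma Cmod_Cmult_minus_le (a b c d : C) :
  Cmod (Cminus (Cmult a b) (Cmult c d)) <= Cmod (Cminus a c) * Cmod b + Cmod c * Cmod (Cminus b d).
Proof.
  replace (Cminus (Cmult a b) (Cmult c d))
    with (Cplus (Cmult (Cminus a c) b) (Cmult c (Cminus b d))) by ring.
  eapply Rle_trans; [apply Cmod_triangle|]. rewrite !Cmod_mult. lra.
Qed.

Lemma Cmod_product_remainder_le (a1 a0 a' b1 b0 b' : C) (d : R) :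
  Cmod (Cminus (Cminus (Cmult a1 b1) (Cmult a0 b0))
          (Cmult (RtoC d) (Cplus (Cmult a' b0) (Cmult a0 b'))))
  <= Cmod (Cminus (Cminus a1 a0) (Cmult (RtoC d) a')) * Cmod b1
     + Rabs d * Cmod a' * Cmod (Cminus b1 b0)
     + Cmod a0 * Cmod (Cminus (Cminus b1 b0) (Cmult (RtoC d) b')).
Proof.
  replace (Cminus (Cminus (Cmult a1 b1) (Cmult a0 b0))
             (Cmult (RtoC d) (Cplus (Cmult a' b0) (Cmult a0 b'))))
    with (Cplus (Cplus (Cmult (Cminus (Cminus a1 a0) (Cmult (RtoC d) a')) b1)
                       (Cmult (Cmult (RtoC d) a') (Cminus b1 b0)))
                (Cmult a0 (Cminus (Cminus b1 b0) (Cmult (RtoC d) b')))) by ring.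
  eapply Rle_trans; [apply Cmod_triangle|].
  eapply Rle_trans; [apply Rplus_le_compat_r, Cmod_triangle|].
  rewrite !Cmod_mult, Cmod_R. lra.
Qed.

Lemma Cmod_Cmult_minus_le_bound (a1 a0 b1 b0 : C) K K' d A B :
  0 <= d -> 0 <= A -> 0 <= B ->
  Cmod (Cminus a1 a0) <= K * d * A -> Cmod b1 <= K' * B ->
  Cmod a0 <= K * A -> Cmod (Cminus b1 b0) <= K' * d * B ->
  Cmod (Cminus (Cmult a1 b1) (Cmult a0 b0)) <= 2 * K * K' * d * (A * B).
Proof.
  intros Hd HA HB Ha Hb1 Ha0 Hb. eapply Rle_trans; [apply Cmod_Cmult_minus_le|].
  assert (E1 : Cmod (Cminus a1 a0) * Cmod b1 <= (K * d * A) * (K' * B))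
    by (apply Rmult_le_compat; auto using Cmod_ge_0).
  assert (E2 : Cmod a0 * Cmod (Cminus b1 b0) <= (K * A) * (K' * d * B))
    by (apply Rmult_le_compat; auto using Cmod_ge_0).
  nra.
Qed.

Lemma Cmod_product_remainder_le_bound (a1 a0 a' b1 b0 b' : C) K K' d A B :
  0 <= A -> 0 <= B ->
  Cmod (Cminus (Cminus a1 a0) (Cmult (RtoC d) a')) <= K * d ^ 2 * A -> Cmod b1 <= K' * B ->
  Cmod a' <= K * A -> Cmod (Cminus b1 b0) <= K' * Rabs d * B ->
  Cmod a0 <= K * A -> Cmod (Cminus (Cminus b1 b0) (Cmult (RtoC d) b')) <= K' * d ^ 2 * B ->
  Cmod (Cminus (Cminus (Cmult a1 b1) (Cmult a0 b0))
          (Cmult (RtoC d) (Cplus (Cmult a' b0) (Cmult a0 b'))))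
  <= 3 * K * K' * d ^ 2 * (A * B).
Proof.
  intros HA HB Ha Hb1 Ha' Hb Ha0 Hb'. eapply Rle_trans; [apply Cmod_product_remainder_le|].
  pose proof (Rabs_pos d). pose proof (pow2_ge_0 d).
  assert (Hd2 : Rabs d * Rabs d = d ^ 2) by (rewrite <- pow2_abs; ring).
  assert (E1 : Cmod (Cminus (Cminus a1 a0) (Cmult (RtoC d) a')) * Cmod b1
               <= (K * d ^ 2 * A) * (K' * B)) by (apply Rmult_le_compat; auto using Cmod_ge_0).
  assert (E2 : Rabs d * Cmod a' * Cmod (Cminus b1 b0) <= Rabs d * (K * A) * (K' * Rabs d * B)).
  { apply Rmult_le_compat; auto using Cmod_ge_0.
    - apply Rmult_le_pos; auto using Cmod_ge_0.
    - now apply Rmult_le_compat_l. }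
  assert (E3 : Cmod a0 * Cmod (Cminus (Cminus b1 b0) (Cmult (RtoC d) b'))
               <= (K * A) * (K' * d ^ 2 * B)) by (apply Rmult_le_compat; auto using Cmod_ge_0).
  assert (Rabs d * (K * A) * (K' * Rabs d * B) = K * K' * d ^ 2 * (A * B))
    by (rewrite <- Hd2; ring).
  nra.
Qed.

Lemma Cmod_cexpi a : Cmod (cexpi a) = 1.
Proof.
  unfold Cmod, cexpi; simpl. rewrite !Rmult_1_r.
  pose proof (sin2_cos2 a) as H. unfold Rsqr in H.
  rewrite Rplus_comm, H. apply sqrt_1.
Qed.

Lemma cexpi_lipschitz a b : Cmod (Cminus (cexpi a) (cexpi b)) <= 2 * Rabs (a - b).
Proof.
  eapply Rle_trans; [apply Cmod_le_Rabs_sum|]. unfold cexpi; simpl.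
  pose proof (Rabs_diff_le_of_derive cos (fun t => - sin t) b a 1
    ltac:(intros; auto_derive; [easy | ring])
    ltac:(intros; cbv beta; rewrite Rabs_Ropp; apply Rabs_le, SIN_bound)).
  pose proof (Rabs_diff_le_of_derive sin cos b a 1
    ltac:(intros; auto_derive; [easy | ring])
    ltac:(intros; apply Rabs_le, COS_bound)).
  unfold Rminus in *. lra.
Qed.

Lemma cexpi_taylor_remainder a b :
  Cmod (Cminus (Cminus (cexpi a) (cexpi b)) (Cmult (Cmult Ci (RtoC (a - b))) (cexpi b)))
    <= 2 * (a - b) ^ 2.
Proof.
  eapply Rle_trans; [apply Cmod_le_Rabs_sum|]. unfold cexpi, Ci, RtoC; simpl.
  pose proof (Rabs_taylor_remainder_le cos (fun t => - sin t) (fun t => - cos t) b a 1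
    ltac:(intros; auto_derive; [easy | ring]) ltac:(intros; auto_derive; [easy | ring])
    ltac:(intros; cbv beta; rewrite Rabs_Ropp; apply Rabs_le, COS_bound)).
  pose proof (Rabs_taylor_remainder_le sin cos (fun t => - sin t) b a 1
    ltac:(intros; auto_derive; [easy | ring]) ltac:(intros; auto_derive; [easy | ring])
    ltac:(intros; cbv beta; rewrite Rabs_Ropp; apply Rabs_le, SIN_bound)).
  replace (cos a + - cos b + - ((0 * (a - b) - 1 * 0) * cos b - (0 * 0 + 1 * (a - b)) * sin b))
    with (cos a - cos b - (a - b) * - sin b) by ring.
  replace (sin a + - sin b + - ((0 * (a - b) - 1 * 0) * sin b + (0 * 0 + 1 * (a - b)) * cos b))
    with (sin a - sin b - (a - b) * cos b) by ring.
  lra.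
Qed.

Lemma Cderiv_of_taylor_remainder (f : R -> C) p0 l M :
  (forall p, Rabs (p - p0) < 1 ->
     Cmod (Cminus (Cminus (f p) (f p0)) (Cmult (RtoC (p - p0)) l)) <= M * (p - p0) ^ 2) ->
  Cderiv f p0 = l.
Proof.
  intros H. destruct l as [l1 l2]. unfold Cderiv. f_equal; apply is_derive_unique.
  - apply (is_derive_of_taylor_remainder _ p0 l1 M). intros p Hp.
    eapply Rle_trans; [|exact (H p Hp)]. eapply Rle_trans; [|apply re_le_Cmod].
    right. f_equal. unfold Re, Cminus, Cplus, Copp, Cmult, RtoC; simpl. ring.
  - apply (is_derive_of_taylor_remainder _ p0 l2 M). intros p Hp.
    eapply Rle_trans; [|exact (H p Hp)]. eapply Rle_trans; [|apply Rmax_Cmod].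
    eapply Rle_trans; [|apply Rmax_r].
    right. f_equal. unfold Cminus, Cplus, Copp, Cmult, RtoC; simpl. ring.
Qed.

Lemma continuous_of_lipschitz {V : NormedModule R_AbsRing} (f : R -> V) (L t : R) :
  (forall s, Rabs (s - t) <= 1 -> norm (minus (f s) (f t)) <= L * Rabs (s - t)) ->
  continuous f t.
Proof.
  intros Hlip. apply filterlim_locally. intros eps.
  assert (HL : 0 < Rabs L + 1) by (pose proof (Rabs_pos L); lra).
  assert (Hd : 0 < Rmin 1 (eps / (Rabs L + 1)))
    by (apply Rmin_glb_lt; [lra | apply Rdiv_lt_0_compat; [apply eps | exact HL]]).
  exists (mkposreal _ Hd). intros s Hs. apply norm_compat1.
  change (Rabs (s - t) < Rmin 1 (eps / (Rabs L + 1))) in Hs.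
  pose proof (Rmin_l 1 (eps / (Rabs L + 1))). pose proof (Rmin_r 1 (eps / (Rabs L + 1))).
  specialize (Hlip s ltac:(lra)).
  assert (Hsmall : Rabs (s - t) * (Rabs L + 1) < eps).
  { apply (Rmult_lt_compat_r (Rabs L + 1)) in Hs; [|exact HL].
    eapply Rlt_le_trans; [exact Hs|].
    apply (Rle_trans _ (eps / (Rabs L + 1) * (Rabs L + 1))); [apply Rmult_le_compat_r; lra|].
    right; field; lra. }
  pose proof (Rabs_pos (s - t)). pose proof (Rle_abs L). nra.
Qed.

Lemma minus_plus_middle {G : AbelianGroup} (x y z : G) :
  minus (plus x (plus y z)) y = plus x z.
Proof.
  unfold minus. rewrite (plus_comm y z), plus_assoc, <- (plus_assoc _ y).
  now rewrite plus_opp_r, plus_zero_r.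
Qed.

(** * Improper integrals over the line *)

Definition cauchy_weight (t : R) : R := / (1 + t²).

Lemma cauchy_weight_pos t : 0 < cauchy_weight t.
Proof. apply Rinv_0_lt_compat. pose proof (Rle_0_sqr t). lra. Qed.

Lemma cauchy_weight_le_1 t : cauchy_weight t <= 1.
Proof.
  unfold cauchy_weight. rewrite <- Rinv_1.
  apply Rinv_le_contravar; [lra|]. pose proof (Rle_0_sqr t). lra.
Qed.

Lemma is_RInt_cauchy_weight (a b : R) : is_RInt cauchy_weight a b (atan b - atan a).
Proof.
  apply (is_RInt_derive atan).
  - intros t _. unfold cauchy_weight. auto_derive; [easy|].
    unfold Rsqr. now rewrite Rmult_1_l, Rmult_1_r.
  - intros t _. apply (ex_derive_continuous (V := R_NormedModule) cauchy_weight).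
    unfold cauchy_weight. auto_derive. pose proof (Rle_0_sqr t). unfold Rsqr in *. lra.
Qed.

Lemma atan_near_PI2 eps : 0 < eps -> exists A, 0 < A /\ PI / 2 - atan A < eps.
Proof.
  intros Heps. pose proof PI_RGT_0.
  pose proof (Rmin_l (eps / 2) (PI / 4)). pose proof (Rmin_r (eps / 2) (PI / 4)).
  set (e := Rmin (eps / 2) (PI / 4)) in *.
  assert (He0 : 0 < e) by (apply Rmin_glb_lt; lra).
  assert (He1 : e < PI / 2) by lra.
  pose proof (tan_gt_0 e He0 He1) as Htan.
  exists (/ tan e). split; [now apply Rinv_0_lt_compat|].
  pose proof (atan_inv (/ tan e) (Rinv_0_lt_compat _ Htan)) as Hinv.
  rewrite Rinv_inv, atan_tan in Hinv by lra.
  lra.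
Qed.

Section LineIntegral.
Context {V : CompleteNormedModule R_AbsRing}.

Definition RInt_line (f : R -> V) : V :=
  RInt_gen f (Rbar_locally m_infty) (Rbar_locally p_infty).

Definition line_dominated (B : R) (f : R -> V) : Prop :=
  (forall t, continuous f t) /\ forall t, norm (f t) <= B * cauchy_weight t.

Lemma line_dominated_nonneg B f : line_dominated B f -> 0 <= B.
Proof.
  intros [_ Hb]. pose proof (Hb 0). pose proof (norm_ge_0 (f 0)).
  pose proof (cauchy_weight_pos 0). nra.
Qed.

Lemma norm_RInt_line_dominated B f a b : line_dominated B f -> a <= b ->
  norm (RInt f a b) <= B * (atan b - atan a).
Proof.
  intros [Hc Hb] Hab.
  apply (norm_RInt_le f (fun t => B * cauchy_weight t) a b); auto.
  - apply RInt_correct, ex_RInt_continuous. intros t _. apply Hc.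
  - exact (is_RInt_scal cauchy_weight a b B _ (is_RInt_cauchy_weight a b)).
Qed.

Let line_filter := filter_prod (Rbar_locally m_infty) (Rbar_locally p_infty).

Let line_filter_proper : ProperFilter line_filter.
Proof. apply filter_prod_proper; apply Rbar_locally_filter. Qed.

Let line_filter_le : line_filter (fun ab => fst ab <= snd ab).
Proof.
  apply (Filter_prod _ _ _ (fun a => a < 0) (fun b => 0 < b)).
  - now exists 0. - now exists 0. - simpl; intros; lra.
Qed.

(* The Cauchy criterion: the tails of [f] are controlled by those of [atan]. *)
Lemma line_dominated_cauchy B f : line_dominated B f ->
  cauchy (filtermap (fun ab => RInt f (fst ab) (snd ab)) line_filter).
Proof.
  intros Hf eps. pose proof (line_dominated_nonneg B f Hf) as HB.
  assert (Hex : forall a b, ex_RInt f a b)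
    by (intros; apply ex_RInt_continuous; intros; apply Hf).
  destruct (atan_near_PI2 (eps / (2 * (B + 1)))) as [A [HA HtailA]].
  { apply Rdiv_lt_0_compat; [apply cond_pos | lra]. }
  exists (RInt f (-A) A).
  apply (Filter_prod _ _ _ (fun a => a < -A) (fun b => A < b)).
  - now exists (-A). - now exists A.
  - intros a b Ha Hb. simpl. apply (@norm_compat1 R_AbsRing V).
    rewrite <- (RInt_Chasles f a (-A) b), <- (RInt_Chasles f (-A) A b) by auto.
    rewrite (minus_plus_middle (G := NormedModule.AbelianGroup R_AbsRing V)).
    eapply Rle_lt_trans; [apply norm_triangle|].
    pose proof (norm_RInt_line_dominated B f a (-A) Hf ltac:(lra)).
    pose proof (norm_RInt_line_dominated B f A b Hf ltac:(lra)).
    rewrite atan_opp in *.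
    pose proof (atan_bound a). pose proof (atan_bound b). pose proof (atan_bound A).
    assert (B * (PI / 2 - atan A) * 2 < eps).
    { apply Rmult_lt_compat_l with (r := 2 * (B + 1)) in HtailA; [|lra].
      field_simplify in HtailA; [|lra]. pose proof (cond_pos eps). nra. }
    nra.
Qed.

Lemma is_RInt_line_dominated B f : line_dominated B f ->
  is_RInt_gen f (Rbar_locally m_infty) (Rbar_locally p_infty) (RInt_line f)
  /\ norm (RInt_line f) <= PI * B.
Proof.
  intros Hf. set (F := filtermap (fun ab => RInt f (fst ab) (snd ab)) line_filter).
  assert (HF : ProperFilter F) by now apply filtermap_proper_filter.
  pose proof (complete_cauchy F HF (line_dominated_cauchy B f Hf)) as Hlim.
  assert (Hlimf : filterlim (fun ab => RInt f (fst ab) (snd ab)) line_filter (locally (lim F)))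
    by (intros P [eps HP]; exact (filter_imp _ _ HP (Hlim eps))).
  assert (His : is_RInt_gen f (Rbar_locally m_infty) (Rbar_locally p_infty) (lim F)).
  { intros P HP. unfold filtermapi.
    apply (filter_imp (fun ab => P (RInt f (fst ab) (snd ab)))).
    - intros [a b] H. exists (RInt f a b). split; [|exact H].
      apply RInt_correct, ex_RInt_continuous. intros; apply Hf.
    - exact (Hlimf P HP). }
  assert (Hval : RInt_line f = lim F)
    by (apply is_RInt_gen_unique; auto; apply Rbar_locally_filter).
  rewrite Hval. split; [exact His|].
  apply (closed_filterlim_loc _ (fun v : V => norm v <= PI * B) _ Hlimf).
  - refine (filter_imp _ _ _ line_filter_le). intros ab Hab.
    pose proof (norm_RInt_line_dominated B f _ _ Hf Hab).
    pose proof (line_dominated_nonneg B f Hf).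
    pose proof (atan_bound (fst ab)). pose proof (atan_bound (snd ab)). nra.
  - apply (closed_comp (fun v : V => norm v) (fun r => r <= PI * B)).
    + intros v. apply (filterlim_norm (K := R_AbsRing) (V := V) v).
    + apply closed_le.
Qed.

Lemma line_dominated_minus B1 B2 (f g : R -> V) :
  line_dominated B1 f -> line_dominated B2 g ->
  line_dominated (B1 + B2) (fun t => minus (f t) (g t)).
Proof.
  intros Hf Hg. split.
  - intros t. apply (continuous_minus (V := V)); [apply Hf | apply Hg].
  - intros t. eapply Rle_trans; [apply (norm_triangle (f t) (opp (g t)))|].
    rewrite (norm_opp (K := R_AbsRing) (V := V)).
    pose proof (proj2 Hf t). pose proof (proj2 Hg t). lra.
Qed.

Lemma line_dominated_scal B k (f : R -> V) :
  line_dominated B f -> line_dominated (Rabs k * B) (fun t => scal k (f t)).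
Proof.
  intros Hf. split.
  - intros t. apply (continuous_scal_r (V := V)), Hf.
  - intros t. eapply Rle_trans; [apply (norm_scal (K := R_AbsRing) (V := V))|].
    pose proof (proj2 Hf t). pose proof (Rabs_pos k). change (abs k) with (Rabs k). nra.
Qed.

Lemma RInt_line_unique (f : R -> V) l :
  is_RInt_gen f (Rbar_locally m_infty) (Rbar_locally p_infty) l -> RInt_line f = l.
Proof. intros H. apply is_RInt_gen_unique; [apply Rbar_locally_filter..|exact H]. Qed.

Lemma RInt_line_plus B1 B2 (f g : R -> V) :
  line_dominated B1 f -> line_dominated B2 g ->
  RInt_line (fun t => plus (f t) (g t)) = plus (RInt_line f) (RInt_line g).
Proof.
  intros Hf Hg. apply RInt_line_unique.
  exact (is_RInt_gen_plus f g _ _ (proj1 (is_RInt_line_dominated B1 f Hf))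
           (proj1 (is_RInt_line_dominated B2 g Hg))).
Qed.

Lemma RInt_line_minus B1 B2 (f g : R -> V) :
  line_dominated B1 f -> line_dominated B2 g ->
  RInt_line (fun t => minus (f t) (g t)) = minus (RInt_line f) (RInt_line g).
Proof.
  intros Hf Hg. apply RInt_line_unique.
  exact (is_RInt_gen_minus f g _ _ (proj1 (is_RInt_line_dominated B1 f Hf))
           (proj1 (is_RInt_line_dominated B2 g Hg))).
Qed.

Lemma RInt_line_scal B k (f : R -> V) : line_dominated B f ->
  RInt_line (fun t => scal k (f t)) = scal k (RInt_line f).
Proof.
  intros Hf. apply RInt_line_unique.
  exact (is_RInt_gen_scal f k _ (proj1 (is_RInt_line_dominated B f Hf))).
Qed.

Lemma norm_RInt_line_minus_le B1 B2 D (f g : R -> V) :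
  line_dominated B1 f -> line_dominated B2 g ->
  (forall t, norm (minus (f t) (g t)) <= D * cauchy_weight t) ->
  norm (minus (RInt_line f) (RInt_line g)) <= PI * D.
Proof.
  intros Hf Hg Hd. rewrite <- (RInt_line_minus B1 B2 f g Hf Hg).
  exact (proj2 (is_RInt_line_dominated D _ (conj (proj1 (line_dominated_minus _ _ _ _ Hf Hg)) Hd))).
Qed.

Definition taylor_remainder (a b c : V) (d : R) : V := minus (minus a b) (scal d c).

Lemma RInt_line_taylor_remainder B1 B2 B3 D d (f1 f2 f3 : R -> V) :
  line_dominated B1 f1 -> line_dominated B2 f2 -> line_dominated B3 f3 ->
  (forall t, norm (taylor_remainder (f1 t) (f2 t) (f3 t) d) <= D * cauchy_weight t) ->
  norm (taylor_remainder (RInt_line f1) (RInt_line f2) (RInt_line f3) d) <= PI * D.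
Proof.
  intros H1 H2 H3 Hrem.
  pose proof (line_dominated_minus _ _ _ _ H1 H2) as H12.
  pose proof (line_dominated_scal _ d _ H3) as H3'.
  assert (E : RInt_line (fun t => taylor_remainder (f1 t) (f2 t) (f3 t) d)
             = taylor_remainder (RInt_line f1) (RInt_line f2) (RInt_line f3) d).
  { unfold taylor_remainder. rewrite (RInt_line_minus _ _ _ _ H12 H3').
    rewrite (RInt_line_minus B1 B2 f1 f2 H1 H2). f_equal. exact (RInt_line_scal B3 d f3 H3). }
  rewrite <- E.
  pose proof (proj1 (line_dominated_minus _ _ _ _ H12 H3')) as Hcont.
  exact (proj2 (is_RInt_line_dominated D _ (conj Hcont Hrem))).
Qed.

End LineIntegral.

Section ComplexIntegral.
Context {Fa Fb : (R -> Prop) -> Prop} {FFa : Filter Fa} {FFb : Filter Fb}.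

Lemma is_RInt_gen_fst (f : R -> C) (l : C) :
  is_RInt_gen (V := C_R_NormedModule) f Fa Fb l ->
  is_RInt_gen (V := R_NormedModule) (fun t => fst (f t)) Fa Fb (fst l).
Proof.
  intros H P [eps HP].
  assert (HQ : locally (T := C_UniformSpace) l (fun z : C => ball (fst l) eps (fst z)))
    by (exists eps; intros z [Hz _]; exact Hz).
  unfold filtermapi in *. eapply filter_imp; [|exact (H _ HQ)]. intros [a b] [y [Hy1 Hy2]].
  exists (fst y). split; [|exact (HP _ Hy2)].
  exact (is_RInt_fct_extend_fst (V := R_NormedModule) f a b y Hy1).
Qed.

Lemma is_RInt_gen_snd (f : R -> C) (l : C) :
  is_RInt_gen (V := C_R_NormedModule) f Fa Fb l ->
  is_RInt_gen (V := R_NormedModule) (fun t => snd (f t)) Fa Fb (snd l).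
Proof.
  intros H P [eps HP].
  assert (HQ : locally (T := C_UniformSpace) l (fun z : C => ball (snd l) eps (snd z)))
    by (exists eps; intros z [_ Hz]; exact Hz).
  unfold filtermapi in *. eapply filter_imp; [|exact (H _ HQ)]. intros [a b] [y [Hy1 Hy2]].
  exists (snd y). split; [|exact (HP _ Hy2)].
  exact (is_RInt_fct_extend_snd (V := R_NormedModule) f a b y Hy1).
Qed.

Lemma is_RInt_gen_pair (f : R -> C) (l1 l2 : R) :
  is_RInt_gen (V := R_NormedModule) (fun t => fst (f t)) Fa Fb l1 ->
  is_RInt_gen (V := R_NormedModule) (fun t => snd (f t)) Fa Fb l2 ->
  is_RInt_gen (V := C_R_NormedModule) f Fa Fb (l1, l2).
Proof.
  intros H1 H2 P [eps HP].
  assert (Q1 : locally l1 (ball l1 eps)) by now exists eps.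
  assert (Q2 : locally l2 (ball l2 eps)) by now exists eps.
  assert (Hprod : Filter (filter_prod Fa Fb)) by now apply filter_prod_filter.
  specialize (H1 _ Q1). specialize (H2 _ Q2). unfold filtermapi in *.
  eapply filter_imp; [|exact (filter_and _ _ H1 H2)].
  intros [a b] [[y1 [Hy1 Hy1']] [y2 [Hy2 Hy2']]].
  exists (y1, y2). split; [|apply HP; split; assumption].
  exact (is_RInt_fct_extend_pair (V := R_NormedModule) f a b y1 y2 Hy1 Hy2).
Qed.

Lemma is_RInt_gen_Cmult (f : R -> C) (l c : C) :
  is_RInt_gen (V := C_R_NormedModule) f Fa Fb l ->
  is_RInt_gen (V := C_R_NormedModule) (fun t => Cmult c (f t)) Fa Fb (Cmult c l).
Proof.
  intros H. pose proof (is_RInt_gen_fst _ _ H) as H1. pose proof (is_RInt_gen_snd _ _ H) as H2.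
  destruct c as [c1 c2], l as [l1 l2]. apply is_RInt_gen_pair.
  - exact (is_RInt_gen_minus _ _ _ _ (is_RInt_gen_scal _ c1 _ H1) (is_RInt_gen_scal _ c2 _ H2)).
  - exact (is_RInt_gen_plus _ _ _ _ (is_RInt_gen_scal _ c1 _ H2) (is_RInt_gen_scal _ c2 _ H1)).
Qed.

End ComplexIntegral.

Notation CV := C_R_CompleteNormedModule.

Lemma norm_CV (z : C) : norm (K := R_AbsRing) (V := CV) z = Cmod z.
Proof. now rewrite Cmod_norm. Qed.

Lemma taylor_remainder_C (a b c : C) d :
  taylor_remainder (V := CV) a b c d = Cminus (Cminus a b) (Cmult (RtoC d) c).
Proof.
  destruct a as [a1 a2], b as [b1 b2], c as [c1 c2].
  unfold taylor_remainder, minus, plus, opp, scal, Cminus, Cplus, Copp, Cmult, RtoC; simpl.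
  unfold prod_plus, prod_opp, prod_scal; simpl.
  unfold plus, opp, mult; simpl. change (scal d c1) with (d * c1). change (scal d c2) with (d * c2).
  f_equal; ring.
Qed.

(** * Iterated integrals over R^4 *)

Definition point := nat -> R.

Definition origin : point := fun _ => 0.

Definition set_coord (x : point) (k : nat) (t : R) : point :=
  fun j => if Nat.eqb j k then t else x j.

Lemma set_coord_same x k t : set_coord x k t k = t.
Proof. unfold set_coord. now rewrite Nat.eqb_refl. Qed.

Lemma set_coord_other x k t j : j <> k -> set_coord x k t j = x j.
Proof. intros H. unfold set_coord. now destruct (Nat.eqb_spec j k). Qed.

Lemma set_coord_twice x k s t : set_coord (set_coord x k s) k t = set_coord x k t.
Proof. apply functional_extensionality; intros j. unfold set_coord. now destruct (Nat.eqb j k). Qed.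

Lemma set_coord_comm x i k s t : i <> k ->
  set_coord (set_coord x i s) k t = set_coord (set_coord x k t) i s.
Proof.
  intros H. apply functional_extensionality; intros j. unfold set_coord.
  destruct (Nat.eqb_spec j k), (Nat.eqb_spec j i); subst; congruence.
Qed.

Lemma set_coord_id x k : set_coord x k (x k) = x.
Proof.
  apply functional_extensionality; intros j. unfold set_coord.
  destruct (Nat.eqb_spec j k); now subst.
Qed.

(* A mask marks the coordinates that are still to be integrated. *)
Definition mask := nat -> bool.

Definition full_mask : mask := fun _ => true.

Definition unmask (b : mask) (k : nat) : mask := fun j => if Nat.eqb j k then false else b j.

Definition coord_weight (c : bool) (t : R) : R := if c then cauchy_weight t else 1.

Definition mask_weight (b : mask) (x : point) : R :=
  coord_weight (b 0%nat) (x 0%nat) * coord_weight (b 1%nat) (x 1%nat)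
  * coord_weight (b 2%nat) (x 2%nat) * coord_weight (b 3%nat) (x 3%nat).

Lemma unmask_other b k j : j <> k -> unmask b k j = b j.
Proof. intros H. unfold unmask. now destruct (Nat.eqb_spec j k). Qed.

Lemma unmask_comm b i k : unmask (unmask b i) k = unmask (unmask b k) i.
Proof.
  apply functional_extensionality; intros j. unfold unmask.
  now destruct (Nat.eqb j k), (Nat.eqb j i).
Qed.

Lemma coord_weight_pos c t : 0 < coord_weight c t.
Proof. destruct c; simpl; [apply cauchy_weight_pos | lra]. Qed.

Lemma coord_weight_le_1 c t : coord_weight c t <= 1.
Proof. destruct c; simpl; [apply cauchy_weight_le_1 | lra]. Qed.

Lemma mask_weight_pos b x : 0 < mask_weight b x.
Proof. unfold mask_weight. repeat apply Rmult_lt_0_compat; apply coord_weight_pos. Qed.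

Lemma mask_weight_le_unmask b x i : mask_weight b x <= mask_weight (unmask b i) x.
Proof.
  assert (Hle : forall j, coord_weight (b j) (x j) <= coord_weight (unmask b i j) (x j)).
  { intros j. unfold unmask. destruct (Nat.eqb j i); [|lra].
    simpl. apply coord_weight_le_1. }
  unfold mask_weight.
  repeat apply Rmult_le_compat; auto;
    repeat apply Rmult_le_pos; apply Rlt_le, coord_weight_pos.
Qed.

Lemma mask_weight_le_1 b x : mask_weight b x <= 1.
Proof.
  eapply Rle_trans; [apply (mask_weight_le_unmask b x 0)|].
  eapply Rle_trans; [apply (mask_weight_le_unmask _ x 1)|].
  eapply Rle_trans; [apply (mask_weight_le_unmask _ x 2)|].
  eapply Rle_trans; [apply (mask_weight_le_unmask _ x 3)|].
  unfold mask_weight, unmask; simpl. lra.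
Qed.

Lemma mask_weight_set_coord b x k t : (k < 4)%nat -> b k = true ->
  mask_weight b (set_coord x k t) = cauchy_weight t * mask_weight (unmask b k) x.
Proof.
  intros Hk Hb. destruct k as [|[|[|[|k]]]]; try lia;
    unfold mask_weight, set_coord, unmask; simpl; rewrite Hb; simpl; ring.
Qed.

Section Dominated.
Context {V : CompleteNormedModule R_AbsRing}.

(* The Lipschitz bound in [x i] is only used for continuity along that
   coordinate, so its weight need not decay in [x i]; this is what lets it
   survive integration in the other coordinates. *)
Definition dominated (M : R) (b : mask) (g : point -> V) : Prop :=
  (forall x, norm (g x) <= M * mask_weight b x) /\
  (forall x i y, (i < 4)%nat -> Rabs (x i - y) <= 1 ->
     norm (minus (g x) (g (set_coord x i y)))
       <= M * Rabs (x i - y) * mask_weight (unmask b i) x).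

Definition partial_integral (k : nat) (g : point -> V) : point -> V :=
  fun x => RInt_line (fun t => g (set_coord x k t)).

Lemma partial_integral_set_coord_same k g x y :
  partial_integral k g (set_coord x k y) = partial_integral k g x.
Proof.
  unfold partial_integral. f_equal.
  apply functional_extensionality; intros t. now rewrite set_coord_twice.
Qed.

Lemma dominated_nonneg M b g : dominated M b g -> 0 <= M.
Proof.
  intros [Hbound _]. pose proof (Hbound origin). pose proof (norm_ge_0 (g origin)).
  pose proof (mask_weight_pos b origin). nra.
Qed.

Lemma dominated_line M b g x k : (k < 4)%nat -> b k = true -> dominated M b g ->
  line_dominated (M * mask_weight (unmask b k) x) (fun t => g (set_coord x k t)).
Proof.
  intros Hk Hb Hg. pose proof (dominated_nonneg M b g Hg) as HM. split.
  - intros t. apply (continuous_of_lipschitz (V := V) _ M). intros s Hs.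
    pose proof (proj2 Hg (set_coord x k s) k t Hk) as H.
    rewrite set_coord_same, set_coord_twice in H.
    eapply Rle_trans; [exact (H Hs)|].
    rewrite <- (Rmult_1_r (M * Rabs (s - t))) at 2.
    apply Rmult_le_compat_l; [pose proof (Rabs_pos (s - t)); nra | apply mask_weight_le_1].
  - intros t. rewrite Rmult_assoc, (Rmult_comm _ (cauchy_weight t)),
      <- mask_weight_set_coord by assumption.
    apply Hg.
Qed.

Lemma dominated_partial_integral M b g k : (k < 4)%nat -> b k = true -> dominated M b g ->
  dominated (PI * M) (unmask b k) (partial_integral k g).
Proof.
  intros Hk Hb Hg. pose proof (dominated_nonneg M b g Hg) as HM. split.
  - intros x. rewrite Rmult_assoc.
    exact (proj2 (is_RInt_line_dominated _ _ (dominated_line M b g x k Hk Hb Hg))).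
  - intros x i y Hi Hy. destruct (Nat.eq_dec i k) as [-> | Hik].
    + rewrite partial_integral_set_coord_same, minus_eq_zero.
      eapply Rle_trans; [right; exact (norm_zero (K := R_AbsRing) (V := V))|].
      pose proof (Rabs_pos (x k - y)). pose proof (mask_weight_pos (unmask (unmask b k) k) x).
      pose proof PI_RGT_0.
      apply Rmult_le_pos; [apply Rmult_le_pos; [apply Rmult_le_pos|]|]; lra.
    + unfold partial_integral.
      replace (PI * M * Rabs (x i - y) * mask_weight (unmask (unmask b k) i) x)
        with (PI * (M * Rabs (x i - y) * mask_weight (unmask (unmask b k) i) x)) by ring.
      apply (norm_RInt_line_minus_le _ _ _ _ _
               (dominated_line M b g x k Hk Hb Hg) (dominated_line M b g _ k Hk Hb Hg)).
      intros t. rewrite (set_coord_comm x i k y t Hik).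
      pose proof (proj2 Hg (set_coord x k t) i y Hi) as H.
      rewrite set_coord_other in H by assumption.
      eapply Rle_trans; [exact (H Hy)|].
      rewrite mask_weight_set_coord by (try rewrite unmask_other; auto).
      rewrite unmask_comm. right; ring.
Qed.

Lemma partial_integral_plus M1 M2 b (f g : point -> V) k :
  (k < 4)%nat -> b k = true -> dominated M1 b f -> dominated M2 b g ->
  partial_integral k (fun x => plus (f x) (g x))
  = fun x => plus (partial_integral k f x) (partial_integral k g x).
Proof.
  intros Hk Hb Hf Hg. apply functional_extensionality; intros x.
  exact (RInt_line_plus _ _ _ _ (dominated_line M1 b f x k Hk Hb Hf)
           (dominated_line M2 b g x k Hk Hb Hg)).
Qed.

Definition dominated_family (M : R) (b : mask) (p0 : R) (g g' : R -> point -> V) : Prop :=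
  (forall p, Rabs (p - p0) < 1 -> dominated M b (g p) /\ dominated M b (g' p)) /\
  (forall p q x, Rabs (p - p0) < 1 -> Rabs (q - p0) < 1 ->
     norm (taylor_remainder (g p x) (g q x) (g' q x) (p - q)) <= M * (p - q) ^ 2 * mask_weight b x).

Lemma dominated_family_partial_integral M b p0 g g' k : (k < 4)%nat -> b k = true ->
  dominated_family M b p0 g g' ->
  dominated_family (PI * M) (unmask b k) p0
    (fun p => partial_integral k (g p)) (fun p => partial_integral k (g' p)).
Proof.
  intros Hk Hb [Hdom Hrem]. split.
  - intros p Hp. destruct (Hdom p Hp). split; now apply dominated_partial_integral.
  - intros p q x Hp Hq. unfold partial_integral.
    destruct (Hdom p Hp) as [Gp _]. destruct (Hdom q Hq) as [Gq G'q].
    replace (PI * M * (p - q) ^ 2 * mask_weight (unmask b k) x)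
      with (PI * (M * (p - q) ^ 2 * mask_weight (unmask b k) x)) by ring.
    apply (RInt_line_taylor_remainder _ _ _ _ _ _ _ _
             (dominated_line M b _ x k Hk Hb Gp) (dominated_line M b _ x k Hk Hb Gq)
             (dominated_line M b _ x k Hk Hb G'q)).
    intros t. eapply Rle_trans; [apply Hrem; assumption|].
    rewrite mask_weight_set_coord by assumption. right; ring.
Qed.

End Dominated.

Lemma partial_integral_Cmult M b (f : point -> C) k c : (k < 4)%nat -> b k = true ->
  dominated (V := CV) M b f ->
  partial_integral (V := CV) k (fun x => Cmult c (f x))
  = fun x => Cmult c (partial_integral (V := CV) k f x).
Proof.
  intros Hk Hb Hf. apply functional_extensionality; intros x.
  pose proof (dominated_line (V := CV) M b f x k Hk Hb Hf) as Hline.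
  pose proof (proj1 (is_RInt_line_dominated _ _ Hline)) as H.
  exact (RInt_line_unique (V := CV) _ _ (is_RInt_gen_Cmult _ _ c H)).
Qed.

(* Coordinates are 0-based: [x 0], ..., [x 3] stand for x1, ..., x4, and the
   innermost integral is over x4, as in [piF]. *)
Definition integral4 (g : point -> C) : C :=
  partial_integral (V := CV) 0
    (partial_integral (V := CV) 1 (partial_integral (V := CV) 2 (partial_integral (V := CV) 3 g)))
    origin.

Lemma dominated_partial_integrals M f : dominated (V := CV) M full_mask f ->
  dominated (PI * M) (unmask full_mask 3) (partial_integral (V := CV) 3 f) /\
  dominated (PI * (PI * M)) (unmask (unmask full_mask 3) 2)
    (partial_integral 2 (partial_integral (V := CV) 3 f)) /\
  dominated (PI * (PI * (PI * M))) (unmask (unmask (unmask full_mask 3) 2) 1)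
    (partial_integral 1 (partial_integral 2 (partial_integral (V := CV) 3 f))).
Proof.
  intros H.
  pose proof (dominated_partial_integral _ _ _ 3 ltac:(lia) eq_refl H) as H3.
  pose proof (dominated_partial_integral _ _ _ 2 ltac:(lia) eq_refl H3) as H2.
  pose proof (dominated_partial_integral _ _ _ 1 ltac:(lia) eq_refl H2) as H1.
  exact (conj H3 (conj H2 H1)).
Qed.

Lemma integral4_plus M M' f g :
  dominated (V := CV) M full_mask f -> dominated (V := CV) M' full_mask g ->
  integral4 (fun x => Cplus (f x) (g x)) = Cplus (integral4 f) (integral4 g).
Proof.
  intros Hf Hg. destruct (dominated_partial_integrals _ _ Hf) as [F3 [F2 F1]].
  destruct (dominated_partial_integrals _ _ Hg) as [G3 [G2 G1]].
  assert (E : integral4 (fun x => plus (f x) (g x)) = plus (integral4 f) (integral4 g)).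
  { unfold integral4.
    rewrite (partial_integral_plus M M' full_mask f g 3 ltac:(lia) eq_refl Hf Hg),
      (partial_integral_plus _ _ _ _ _ 2 ltac:(lia) eq_refl F3 G3),
      (partial_integral_plus _ _ _ _ _ 1 ltac:(lia) eq_refl F2 G2),
      (partial_integral_plus _ _ _ _ _ 0 ltac:(lia) eq_refl F1 G1).
    reflexivity. }
  exact E.
Qed.

Lemma integral4_Cmult M f c : dominated (V := CV) M full_mask f ->
  integral4 (fun x => Cmult c (f x)) = Cmult c (integral4 f).
Proof.
  intros Hf. destruct (dominated_partial_integrals _ _ Hf) as [F3 [F2 F1]].
  unfold integral4.
  rewrite (partial_integral_Cmult M full_mask f 3 c ltac:(lia) eq_refl Hf),
    (partial_integral_Cmult _ _ _ 2 c ltac:(lia) eq_refl F3),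
    (partial_integral_Cmult _ _ _ 1 c ltac:(lia) eq_refl F2),
    (partial_integral_Cmult _ _ _ 0 c ltac:(lia) eq_refl F1).
  reflexivity.
Qed.

Lemma Cderiv_integral4 M (g g' : R -> point -> C) p0 :
  dominated_family (V := CV) M full_mask p0 g g' ->
  Cderiv (fun p => integral4 (g p)) p0 = integral4 (g' p0).
Proof.
  intros H.
  apply (dominated_family_partial_integral _ _ _ _ _ 3 ltac:(lia) eq_refl) in H.
  apply (dominated_family_partial_integral _ _ _ _ _ 2 ltac:(lia) eq_refl) in H.
  apply (dominated_family_partial_integral _ _ _ _ _ 1 ltac:(lia) eq_refl) in H.
  apply (dominated_family_partial_integral _ _ _ _ _ 0 ltac:(lia) eq_refl) in H.
  apply (Cderiv_of_taylor_remainder _ p0 _ (PI * (PI * (PI * (PI * M))))).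
  intros p Hp. destruct H as [_ Hrem].
  specialize (Hrem p p0 origin Hp ltac:(rewrite Rminus_eq_0, Rabs_R0; lra)).
  assert (Hw : mask_weight (unmask (unmask (unmask (unmask full_mask 3) 2) 1) 0) origin = 1)
    by (unfold mask_weight, unmask, coord_weight; simpl; ring).
  rewrite taylor_remainder_C, norm_CV, Hw, Rmult_1_r in Hrem. exact Hrem.
Qed.

(** * Tempered functions *)

Definition bracket (x : point) : R :=
  1 + x 0%nat ^ 2 + x 1%nat ^ 2 + x 2%nat ^ 2 + x 3%nat ^ 2.

Lemma bracket_ge_1 x : 1 <= bracket x.
Proof.
  unfold bracket. pose proof (pow2_ge_0 (x 0%nat)). pose proof (pow2_ge_0 (x 1%nat)).
  pose proof (pow2_ge_0 (x 2%nat)). pose proof (pow2_ge_0 (x 3%nat)). lra.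
Qed.

Lemma bracket_pow_ge_1 x n : 1 <= bracket x ^ n.
Proof. apply pow_R1_Rle, bracket_ge_1. Qed.

Lemma bracket_pow_pos x n : 0 < bracket x ^ n.
Proof. pose proof (bracket_pow_ge_1 x n). lra. Qed.

Lemma bracket_pow_le_pow x n m : (n <= m)%nat -> bracket x ^ n <= bracket x ^ m.
Proof. intros H. apply Rle_pow; [apply bracket_ge_1 | exact H]. Qed.

Lemma mul_bracket_pow_le K K' x n n' : 0 <= K -> K <= K' -> (n <= n')%nat ->
  K * bracket x ^ n <= K' * bracket x ^ n'.
Proof.
  intros HK HKK' Hn. pose proof (bracket_pow_le_pow x n n' Hn).
  pose proof (bracket_pow_pos x n). nra.
Qed.

Lemma Rabs_coord_le_bracket x j : (j < 4)%nat -> Rabs (x j) <= bracket x.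
Proof.
  intros Hj. assert (Rabs (x j) <= 1 + x j ^ 2).
  { rewrite <- (pow2_abs (x j)). pose proof (pow2_ge_0 (Rabs (x j) - 1)). simpl in *. nra. }
  pose proof (pow2_ge_0 (x 0%nat)). pose proof (pow2_ge_0 (x 1%nat)).
  pose proof (pow2_ge_0 (x 2%nat)). pose proof (pow2_ge_0 (x 3%nat)).
  destruct j as [|[|[|[|j]]]]; try lia; unfold bracket; lra.
Qed.

Lemma bracket_set_coord_le x i y : (i < 4)%nat -> Rabs (x i - y) <= 1 ->
  bracket (set_coord x i y) <= 3 * bracket x.
Proof.
  intros Hi Hy. assert (y ^ 2 <= 2 * x i ^ 2 + 2).
  { apply Rabs_le_between in Hy. pose proof (pow2_ge_0 (x i + (x i - y))). simpl. nra. }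
  pose proof (pow2_ge_0 (x 0%nat)). pose proof (pow2_ge_0 (x 1%nat)).
  pose proof (pow2_ge_0 (x 2%nat)). pose proof (pow2_ge_0 (x 3%nat)).
  destruct i as [|[|[|[|i]]]]; try lia; unfold bracket, set_coord; simpl in *; lra.
Qed.

Lemma bracket_pow_set_coord_le x i y n : (i < 4)%nat -> Rabs (x i - y) <= 1 ->
  bracket (set_coord x i y) ^ n <= 3 ^ n * bracket x ^ n.
Proof.
  intros Hi Hy. rewrite <- Rpow_mult_distr. apply pow_incr. split.
  - pose proof (bracket_ge_1 (set_coord x i y)). lra.
  - now apply bracket_set_coord_le.
Qed.

Lemma bracket_pow_le_set_coord x i y n : (i < 4)%nat -> Rabs (x i - y) <= 1 ->
  bracket x ^ n <= 3 ^ n * bracket (set_coord x i y) ^ n.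
Proof.
  intros Hi Hy. pose proof (bracket_pow_set_coord_le (set_coord x i y) i (x i) n Hi) as H.
  rewrite set_coord_twice, set_coord_id, set_coord_same, Rabs_minus_sym in H. now apply H.
Qed.

Lemma mask_weight_full_ge x : / bracket x ^ 4 <= mask_weight full_mask x.
Proof.
  assert (Hq : 0 < / bracket x) by (apply Rinv_0_lt_compat; pose proof (bracket_ge_1 x); lra).
  assert (Hcoord : forall j, (j < 4)%nat -> / bracket x <= cauchy_weight (x j)).
  { intros j Hj. apply Rinv_le_contravar; [pose proof (Rle_0_sqr (x j)); lra|].
    pose proof (pow2_ge_0 (x 0%nat)). pose proof (pow2_ge_0 (x 1%nat)).
    pose proof (pow2_ge_0 (x 2%nat)). pose proof (pow2_ge_0 (x 3%nat)).
    destruct j as [|[|[|[|j]]]]; try lia; unfold bracket, Rsqr; simpl in *; lra. }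
  replace (/ bracket x ^ 4) with (/ bracket x * / bracket x * / bracket x * / bracket x)
    by (rewrite <- pow_inv; simpl; ring).
  unfold mask_weight, full_mask, coord_weight.
  repeat apply Rmult_le_compat; try (apply Hcoord; lia); repeat apply Rmult_le_pos; lra.
Qed.

Lemma le_mul_mask_weight_full Z A x : 0 <= A -> Z * bracket x ^ 4 <= A ->
  Z <= A * mask_weight full_mask x.
Proof.
  intros HA H. pose proof (mask_weight_full_ge x). pose proof (bracket_pow_pos x 4).
  apply (Rmult_le_compat_r (/ bracket x ^ 4)) in H; [|left; now apply Rinv_0_lt_compat].
  rewrite Rmult_assoc, Rinv_r, Rmult_1_r in H by lra.
  eapply Rle_trans; [exact H|]. now apply Rmult_le_compat_l.
Qed.

Definition tempered (F : point -> C) (K : R) (n : nat) : Prop :=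
  (forall x, Cmod (F x) <= K * bracket x ^ n) /\
  (forall x i y, (i < 4)%nat -> Rabs (x i - y) <= 1 ->
     Cmod (Cminus (F x) (F (set_coord x i y))) <= K * Rabs (x i - y) * bracket x ^ n).

Definition is_tempered (F : point -> C) : Prop := exists K n, tempered F K n.

Lemma tempered_nonneg F K n : tempered F K n -> 0 <= K.
Proof.
  intros [H _]. pose proof (H origin). pose proof (Cmod_ge_0 (F origin)).
  pose proof (bracket_pow_pos origin n). nra.
Qed.

Lemma tempered_weaken F K n K' n' : tempered F K n -> K <= K' -> (n <= n')%nat -> tempered F K' n'.
Proof.
  intros HF HK Hn. pose proof (tempered_nonneg _ _ _ HF) as HK0. destruct HF as [H1 H2]. split.
  - intros x. eapply Rle_trans; [apply H1 | now apply mul_bracket_pow_le].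
  - intros x i y Hi Hy. eapply Rle_trans; [now apply H2|].
    pose proof (mul_bracket_pow_le K K' x n n' HK0 HK Hn). pose proof (Rabs_pos (x i - y)). nra.
Qed.

Lemma is_tempered_ext F G : is_tempered F -> (forall x, F x = G x) -> is_tempered G.
Proof. intros HF E. now rewrite <- (functional_extensionality F G E). Qed.

Lemma tempered_const c : tempered (fun _ => c) (Cmod c) 0.
Proof.
  split.
  - intros x. simpl. lra.
  - intros x i y _ _. replace (Cminus c c) with (RtoC 0) by ring. rewrite Cmod_0.
    pose proof (Cmod_ge_0 c). pose proof (Rabs_pos (x i - y)). simpl. nra.
Qed.

Lemma tempered_coord j : (j < 4)%nat -> tempered (fun x => RtoC (x j)) 1 1.
Proof.
  intros Hj. split.
  - intros x. rewrite Cmod_R, pow_1, Rmult_1_l. now apply Rabs_coord_le_bracket.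
  - intros x i y Hi Hy. rewrite pow_1, <- RtoC_minus, Cmod_R.
    pose proof (bracket_ge_1 x). pose proof (Rabs_pos (x i - y)).
    unfold set_coord. destruct (Nat.eqb_spec j i).
    + subst. nra.
    + rewrite Rminus_eq_0, Rabs_R0. nra.
Qed.

Lemma tempered_plus F G K K' n m : tempered F K n -> tempered G K' m ->
  tempered (fun x => Cplus (F x) (G x)) (K + K') (n + m).
Proof.
  intros HF HG. pose proof (tempered_nonneg _ _ _ HF). pose proof (tempered_nonneg _ _ _ HG).
  destruct HF as [F1 F2], HG as [G1 G2].
  assert (Hx : forall x, K * bracket x ^ n + K' * bracket x ^ m <= (K + K') * bracket x ^ (n + m)).
  { intros x. pose proof (mul_bracket_pow_le K K x n (n + m) ltac:(lra) ltac:(lra) ltac:(lia)).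
    pose proof (mul_bracket_pow_le K' K' x m (n + m) ltac:(lra) ltac:(lra) ltac:(lia)). lra. }
  split.
  - intros x. eapply Rle_trans; [apply Cmod_triangle|].
    pose proof (F1 x). pose proof (G1 x). pose proof (Hx x). lra.
  - intros x i y Hi Hy.
    replace (Cminus (Cplus (F x) (G x)) (Cplus (F (set_coord x i y)) (G (set_coord x i y))))
      with (Cplus (Cminus (F x) (F (set_coord x i y))) (Cminus (G x) (G (set_coord x i y))))
      by ring.
    eapply Rle_trans; [apply Cmod_triangle|].
    pose proof (F2 x i y Hi Hy). pose proof (G2 x i y Hi Hy). pose proof (Hx x).
    pose proof (Rabs_pos (x i - y)). nra.
Qed.

Lemma tempered_mult F G K K' n m : tempered F K n -> tempered G K' m ->
  tempered (fun x => Cmult (F x) (G x)) (K * K' * (1 + 3 ^ n)) (n + m).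
Proof.
  intros HF HG. pose proof (tempered_nonneg _ _ _ HF). pose proof (tempered_nonneg _ _ _ HG).
  destruct HF as [F1 F2], HG as [G1 G2].
  assert (H3 : 1 <= 3 ^ n) by (apply pow_R1_Rle; lra).
  split.
  - intros x. rewrite Cmod_mult, pow_add.
    pose proof (F1 x). pose proof (G1 x).
    pose proof (Cmod_ge_0 (F x)). pose proof (Cmod_ge_0 (G x)).
    pose proof (bracket_pow_pos x n). pose proof (bracket_pow_pos x m).
    assert (Cmod (F x) * Cmod (G x) <= (K * bracket x ^ n) * (K' * bracket x ^ m))
      by (apply Rmult_le_compat; auto).
    assert (0 <= K * K' * bracket x ^ n * bracket x ^ m) by (repeat apply Rmult_le_pos; lra).
    nra.
  - intros x i y Hi Hy. eapply Rle_trans; [apply Cmod_Cmult_minus_le|]. rewrite pow_add.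
    pose proof (F2 x i y Hi Hy). pose proof (G2 x i y Hi Hy). pose proof (G1 x).
    pose proof (F1 (set_coord x i y)) as HFy. pose proof (bracket_pow_set_coord_le x i y n Hi Hy).
    pose proof (Cmod_ge_0 (F (set_coord x i y))). pose proof (Cmod_ge_0 (G x)).
    pose proof (Cmod_ge_0 (Cminus (F x) (F (set_coord x i y)))).
    pose proof (Cmod_ge_0 (Cminus (G x) (G (set_coord x i y)))).
    pose proof (bracket_pow_pos x n). pose proof (bracket_pow_pos x m).
    pose proof (Rabs_pos (x i - y)).
    set (d := Rabs (x i - y)) in *. set (A := bracket x ^ n) in *. set (B := bracket x ^ m) in *.
    assert (E1 : Cmod (Cminus (F x) (F (set_coord x i y))) * Cmod (G x) <= (K * d * A) * (K' * B))
      by (apply Rmult_le_compat; auto).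
    assert (Cmod (F (set_coord x i y)) <= K * (3 ^ n * A))
      by (eapply Rle_trans; [exact HFy | now apply Rmult_le_compat_l]).
    assert (E2 : Cmod (F (set_coord x i y)) * Cmod (Cminus (G x) (G (set_coord x i y)))
                 <= (K * (3 ^ n * A)) * (K' * d * B)) by (apply Rmult_le_compat; auto).
    assert (K * K' * (1 + 3 ^ n) * d * (A * B)
            = (K * d * A) * (K' * B) + (K * (3 ^ n * A)) * (K' * d * B)) by ring.
    lra.
Qed.

Lemma tempered_cexpi (th : point -> R) K n : tempered (fun x => RtoC (th x)) K n ->
  tempered (fun x => cexpi (th x)) (1 + 2 * K) n.
Proof.
  intros HP. pose proof (tempered_nonneg _ _ _ HP). destruct HP as [_ H2]. split.
  - intros x. rewrite Cmod_cexpi. pose proof (bracket_pow_ge_1 x n). nra.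
  - intros x i y Hi Hy. eapply Rle_trans; [apply cexpi_lipschitz|].
    pose proof (H2 x i y Hi Hy) as Hth. rewrite <- RtoC_minus, Cmod_R in Hth.
    pose proof (Rabs_pos (x i - y)). pose proof (bracket_pow_pos x n). nra.
Qed.

Lemma is_tempered_plus F G :
  is_tempered F -> is_tempered G -> is_tempered (fun x => Cplus (F x) (G x)).
Proof. intros [K [n H]] [K' [m H']]. eexists; eexists; eapply tempered_plus; eassumption. Qed.

Lemma is_tempered_mult F G :
  is_tempered F -> is_tempered G -> is_tempered (fun x => Cmult (F x) (G x)).
Proof. intros [K [n H]] [K' [m H']]. eexists; eexists; eapply tempered_mult; eassumption. Qed.

Lemma is_tempered_const c : is_tempered (fun _ => c).
Proof. eexists; eexists; apply tempered_const. Qed.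

Lemma is_tempered_coord j : (j < 4)%nat -> is_tempered (fun x => RtoC (x j)).
Proof. intros; eexists; eexists; now apply tempered_coord. Qed.

Lemma is_tempered_cexpi (th : point -> R) :
  is_tempered (fun x => RtoC (th x)) -> is_tempered (fun x => cexpi (th x)).
Proof. intros [K [n H]]. eexists; eexists; eapply tempered_cexpi; eassumption. Qed.

Ltac C_ring := apply injective_projections; simpl; first [unfold Rdiv; ring | field].

Lemma is_tempered_Rplus (f g : point -> R) :
  is_tempered (fun x => RtoC (f x)) -> is_tempered (fun x => RtoC (g x)) ->
  is_tempered (fun x => RtoC (f x + g x)).
Proof.
  intros Hf Hg. apply (is_tempered_ext _ _ (is_tempered_plus _ _ Hf Hg)).
  intros x. now rewrite RtoC_plus.
Qed.

Lemma is_tempered_Ropp (f : point -> R) :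
  is_tempered (fun x => RtoC (f x)) -> is_tempered (fun x => RtoC (- f x)).
Proof.
  intros Hf. apply (is_tempered_ext _ _ (is_tempered_mult _ _ (is_tempered_const (RtoC (-1))) Hf)).
  intros x. C_ring.
Qed.

Lemma is_tempered_Rmult (f g : point -> R) :
  is_tempered (fun x => RtoC (f x)) -> is_tempered (fun x => RtoC (g x)) ->
  is_tempered (fun x => RtoC (f x * g x)).
Proof.
  intros Hf Hg. apply (is_tempered_ext _ _ (is_tempered_mult _ _ Hf Hg)).
  intros x. now rewrite RtoC_mult.
Qed.

Lemma is_tempered_Rpow (f : point -> R) n :
  is_tempered (fun x => RtoC (f x)) -> is_tempered (fun x => RtoC (f x ^ n)).
Proof.
  intros Hf. induction n as [|n IH]; [simpl; apply is_tempered_const|].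
  exact (is_tempered_Rmult _ _ Hf IH).
Qed.

Ltac solve_tempered :=
  repeat first [ assumption | apply is_tempered_const | (apply is_tempered_coord; lia)
               | apply is_tempered_plus | apply is_tempered_mult | apply is_tempered_cexpi
               | apply is_tempered_Rplus | apply is_tempered_Ropp | apply is_tempered_Rmult
               | apply is_tempered_Rpow ].

Definition tempered_family (F F' : R -> point -> C) (p0 K : R) (n : nat) : Prop :=
  (forall p, Rabs (p - p0) < 1 -> tempered (F p) K n /\ tempered (F' p) K n) /\
  (forall p q x, Rabs (p - p0) < 1 -> Rabs (q - p0) < 1 ->
     Cmod (Cminus (F p x) (F q x)) <= K * Rabs (p - q) * bracket x ^ n) /\
  (forall p q x, Rabs (p - p0) < 1 -> Rabs (q - p0) < 1 ->
     Cmod (Cminus (Cminus (F p x) (F q x)) (Cmult (RtoC (p - q)) (F' q x)))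
       <= K * (p - q) ^ 2 * bracket x ^ n).

Definition is_tempered_family (F F' : R -> point -> C) (p0 : R) : Prop :=
  exists K n, tempered_family F F' p0 K n.

Lemma tempered_family_nonneg F F' p0 K n : tempered_family F F' p0 K n -> 0 <= K.
Proof.
  intros [H _]. destruct (H p0) as [H1 _]; [rewrite Rminus_eq_0, Rabs_R0; lra|].
  exact (tempered_nonneg _ _ _ H1).
Qed.

Lemma is_tempered_family_ext F F' G G' p0 : is_tempered_family F F' p0 ->
  (forall p x, F p x = G p x) -> (forall p x, F' p x = G' p x) -> is_tempered_family G G' p0.
Proof.
  intros H E1 E2.
  replace G with F by (do 2 (apply functional_extensionality; intros); apply E1).
  replace G' with F' by (do 2 (apply functional_extensionality; intros); apply E2).
  exact H.
Qed.

Lemma is_tempered_family_const F p0 :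
  is_tempered F -> is_tempered_family (fun _ => F) (fun _ _ => RtoC 0) p0.
Proof.
  intros [K [n H]]. pose proof (tempered_nonneg _ _ _ H). exists K, n. split; [|split].
  - intros p _. split; [exact H|].
    eapply tempered_weaken; [apply (tempered_const (RtoC 0)) | rewrite Cmod_0; lra | lia].
  - intros p q x _ _. replace (Cminus (F x) (F x)) with (RtoC 0) by ring. rewrite Cmod_0.
    pose proof (Rabs_pos (p - q)). pose proof (bracket_pow_pos x n).
    apply Rmult_le_pos; [apply Rmult_le_pos|]; lra.
  - intros p q x _ _.
    replace (Cminus (Cminus (F x) (F x)) (Cmult (RtoC (p - q)) (RtoC 0))) with (RtoC 0) by ring.
    rewrite Cmod_0. pose proof (pow2_ge_0 (p - q)). pose proof (bracket_pow_pos x n).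
    apply Rmult_le_pos; [apply Rmult_le_pos|]; lra.
Qed.

Lemma is_tempered_family_param p0 : is_tempered_family (fun p _ => RtoC p) (fun _ _ => RtoC 1) p0.
Proof.
  exists (Rabs p0 + 2), 0%nat. pose proof (Rabs_pos p0). split; [|split].
  - intros p Hp. split.
    + eapply tempered_weaken; [apply (tempered_const (RtoC p)) | | lia].
      rewrite Cmod_R. pose proof (Rabs_triang (p - p0) p0).
      replace (p - p0 + p0) with p in * by ring. lra.
    + eapply tempered_weaken; [apply (tempered_const (RtoC 1)) | | lia].
      rewrite Cmod_R, Rabs_R1. lra.
  - intros p q x _ _. rewrite <- RtoC_minus, Cmod_R. simpl.
    pose proof (Rabs_pos (p - q)). nra.
  - intros p q x _ _.
    replace (Cminus (Cminus (RtoC p) (RtoC q)) (Cmult (RtoC (p - q)) (RtoC 1))) with (RtoC 0)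
      by (unfold RtoC, Cminus, Cplus, Copp, Cmult; simpl; f_equal; ring).
    rewrite Cmod_0. pose proof (pow2_ge_0 (p - q)). simpl. nra.
Qed.

Lemma is_tempered_family_plus F F' G G' p0 :
  is_tempered_family F F' p0 -> is_tempered_family G G' p0 ->
  is_tempered_family (fun p x => Cplus (F p x) (G p x)) (fun p x => Cplus (F' p x) (G' p x)) p0.
Proof.
  intros [K [n HF]] [K' [m HG]].
  pose proof (tempered_family_nonneg _ _ _ _ _ HF) as HK.
  pose proof (tempered_family_nonneg _ _ _ _ _ HG) as HK'.
  destruct HF as [F1 [F2 F3]], HG as [G1 [G2 G3]].
  assert (Hx : forall x, K * bracket x ^ n + K' * bracket x ^ m <= (K + K') * bracket x ^ (n + m)).
  { intros x. pose proof (mul_bracket_pow_le K K x n (n + m) HK ltac:(lra) ltac:(lia)).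
    pose proof (mul_bracket_pow_le K' K' x m (n + m) HK' ltac:(lra) ltac:(lia)). lra. }
  exists (K + K'), (n + m)%nat. split; [|split].
  - intros p Hp. destruct (F1 p Hp), (G1 p Hp). split; now apply tempered_plus.
  - intros p q x Hp Hq.
    replace (Cminus (Cplus (F p x) (G p x)) (Cplus (F q x) (G q x)))
      with (Cplus (Cminus (F p x) (F q x)) (Cminus (G p x) (G q x))) by ring.
    eapply Rle_trans; [apply Cmod_triangle|].
    pose proof (F2 p q x Hp Hq). pose proof (G2 p q x Hp Hq). pose proof (Hx x).
    pose proof (Rabs_pos (p - q)). nra.
  - intros p q x Hp Hq.
    replace (Cminus (Cminus (Cplus (F p x) (G p x)) (Cplus (F q x) (G q x)))
               (Cmult (RtoC (p - q)) (Cplus (F' q x) (G' q x))))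
      with (Cplus (Cminus (Cminus (F p x) (F q x)) (Cmult (RtoC (p - q)) (F' q x)))
                  (Cminus (Cminus (G p x) (G q x)) (Cmult (RtoC (p - q)) (G' q x)))) by ring.
    eapply Rle_trans; [apply Cmod_triangle|].
    pose proof (F3 p q x Hp Hq). pose proof (G3 p q x Hp Hq). pose proof (Hx x).
    pose proof (pow2_ge_0 (p - q)). nra.
Qed.

Lemma is_tempered_family_mult F F' G G' p0 :
  is_tempered_family F F' p0 -> is_tempered_family G G' p0 ->
  is_tempered_family (fun p x => Cmult (F p x) (G p x))
    (fun p x => Cplus (Cmult (F' p x) (G p x)) (Cmult (F p x) (G' p x))) p0.
Proof.
  intros [K [n HF]] [K' [m HG]].
  pose proof (tempered_family_nonneg _ _ _ _ _ HF) as HK.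
  pose proof (tempered_family_nonneg _ _ _ _ _ HG) as HK'.
  destruct HF as [F1 [F2 F3]], HG as [G1 [G2 G3]].
  assert (H3 : 1 <= 3 ^ n) by (apply pow_R1_Rle; lra).
  assert (HKK : 0 <= K * K') by nra.
  set (Kf := 2 * K * K' * (1 + 3 ^ n) + 3 * K * K').
  assert (Hx : forall c x, 0 <= c -> c <= 3 ->
            c * K * K' * (bracket x ^ n * bracket x ^ m) <= Kf * bracket x ^ (n + m + (n + m))).
  { intros c x Hc0 Hc3. rewrite <- pow_add.
    apply mul_bracket_pow_le; [nra | unfold Kf; nra | lia]. }
  exists Kf, (n + m + (n + m))%nat. split; [|split].
  - intros p Hp. destruct (F1 p Hp) as [PF PF'], (G1 p Hp) as [PG PG']. split.
    + eapply tempered_weaken; [apply tempered_mult; eassumption | unfold Kf; nra | lia].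
    + eapply tempered_weaken; [apply tempered_plus; apply tempered_mult; eassumption
                              | unfold Kf; nra | lia].
  - intros p q x Hp Hq.
    destruct (F1 q Hq) as [[PF _] _]. destruct (G1 p Hp) as [[PG _] _].
    pose proof (bracket_pow_pos x n). pose proof (bracket_pow_pos x m).
    pose proof (Rabs_pos (p - q)). pose proof (Hx 2 x ltac:(lra) ltac:(lra)).
    eapply Rle_trans; [apply Cmod_Cmult_minus_le_bound; auto; lra|]. nra.
  - intros p q x Hp Hq.
    destruct (F1 q Hq) as [[PF _] [PF' _]]. destruct (G1 p Hp) as [[PG _] _].
    pose proof (bracket_pow_pos x n). pose proof (bracket_pow_pos x m).
    pose proof (pow2_ge_0 (p - q)). pose proof (Hx 3 x ltac:(lra) ltac:(lra)).
    eapply Rle_trans; [apply Cmod_product_remainder_le_bound; auto; lra|]. nra.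
Qed.

Lemma cexpi_remainder_le_bound a b t d K A : 0 <= K -> 1 <= A ->
  Rabs (a - b) <= K * Rabs d * A -> Rabs (a - b - d * t) <= K * d ^ 2 * A ->
  Cmod (Cminus (Cminus (cexpi a) (cexpi b)) (Cmult (RtoC d) (Cmult (Cmult Ci (RtoC t)) (cexpi b))))
    <= (2 * K * K + K) * d ^ 2 * (A * A).
Proof.
  intros HK HA Hab Hrem.
  replace (Cminus (Cminus (cexpi a) (cexpi b))
             (Cmult (RtoC d) (Cmult (Cmult Ci (RtoC t)) (cexpi b))))
    with (Cplus (Cminus (Cminus (cexpi a) (cexpi b)) (Cmult (Cmult Ci (RtoC (a - b))) (cexpi b)))
            (Cmult (Cmult Ci (RtoC (a - b - d * t))) (cexpi b)))
    by (rewrite !RtoC_minus, RtoC_mult; ring).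
  eapply Rle_trans; [apply Cmod_triangle|].
  rewrite !Cmod_mult, Cmod_Ci, Cmod_cexpi, Cmod_R.
  pose proof (cexpi_taylor_remainder a b). pose proof (pow2_ge_0 d).
  assert (Hab2 : (a - b) ^ 2 <= K * K * d ^ 2 * (A * A)).
  { rewrite <- (pow2_abs (a - b)), <- (pow2_abs d).
    pose proof (Rabs_pos (a - b)). pose proof (Rabs_pos d). simpl. nra. }
  assert (K * d ^ 2 * A <= K * d ^ 2 * (A * A)) by (apply Rmult_le_compat_l; nra).
  nra.
Qed.

Lemma is_tempered_family_cexpi (th th' : R -> point -> R) p0 :
  is_tempered_family (fun p x => RtoC (th p x)) (fun p x => RtoC (th' p x)) p0 ->
  is_tempered_family (fun p x => cexpi (th p x))
    (fun p x => Cmult (Cmult Ci (RtoC (th' p x))) (cexpi (th p x))) p0.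
Proof.
  intros [K [n HS]]. pose proof (tempered_family_nonneg _ _ _ _ _ HS) as HK.
  destruct HS as [S1 [S2 S3]].
  set (K2 := Cmod Ci * K * (1 + 3 ^ 0) * (1 + 2 * K) * (1 + 3 ^ (0 + n))).
  assert (HK2 : 0 <= K2).
  { unfold K2. rewrite Cmod_Ci. pose proof (pow_R1_Rle 3 n ltac:(lra)). simpl. nra. }
  set (Kf := (1 + 2 * K) + K2 + (2 * K * K + K)).
  assert (HK2f : K2 <= Kf) by (unfold Kf; nra).
  exists Kf, (n + n)%nat. split; [|split].
  - intros p Hp. destruct (S1 p Hp) as [P1 P2]. split.
    + eapply tempered_weaken; [apply tempered_cexpi, P1 | unfold Kf; nra | lia].
    + eapply tempered_weaken;
        [apply tempered_mult; [apply tempered_mult; [apply tempered_const | exact P2]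
                              | apply tempered_cexpi, P1]
        | exact HK2f | lia].
  - intros p q x Hp Hq. eapply Rle_trans; [apply cexpi_lipschitz|].
    pose proof (S2 p q x Hp Hq) as H. rewrite <- RtoC_minus, Cmod_R in H.
    pose proof (mul_bracket_pow_le (2 * K) Kf x n (n + n)
                  ltac:(lra) ltac:(unfold Kf; nra) ltac:(lia)).
    pose proof (Rabs_pos (p - q)). nra.
  - intros p q x Hp Hq.
    pose proof (S2 p q x Hp Hq) as H2. rewrite <- RtoC_minus, Cmod_R in H2.
    pose proof (S3 p q x Hp Hq) as H3. rewrite <- RtoC_mult, <- !RtoC_minus, Cmod_R in H3.
    pose proof (cexpi_remainder_le_bound _ _ _ _ K _ HK (bracket_pow_ge_1 x n) H2 H3) as Hcexpi.
    eapply Rle_trans; [exact Hcexpi|].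
    rewrite <- pow_add. pose proof (pow2_ge_0 (p - q)). pose proof (bracket_pow_pos x (n + n)).
    apply Rmult_le_compat_r; [lra|]. apply Rmult_le_compat_r; [lra|]. unfold Kf; nra.
Qed.

Lemma schwartz1_R_Derive_n_bounded (g : R -> R) n : schwartz1_R g ->
  exists M, forall x, Rabs (Derive_n g n x) <= M.
Proof.
  intros H. destruct (H n) as [_ [M HM]]. exists M. intros x.
  pose proof (HM x). pose proof (pow_R1_Rle (1 + x ^ 2) n ltac:(pose proof (pow2_ge_0 x); lra)).
  pose proof (Rabs_pos (Derive_n g n x)). nra.
Qed.

Lemma schwartz1_R_C2_bounds (g : R -> R) : schwartz1_R g ->
  exists M, forall s t,
    Rabs (g s) <= M /\ Rabs (Derive g s) <= M /\ Rabs (g s - g t) <= M * Rabs (s - t) /\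
    Rabs (Derive g s - Derive g t) <= M * Rabs (s - t) /\
    Rabs (g s - g t - (s - t) * Derive g t) <= M * (s - t) ^ 2.
Proof.
  intros H.
  destruct (schwartz1_R_Derive_n_bounded g 0 H) as [M0 B0].
  destruct (schwartz1_R_Derive_n_bounded g 1 H) as [M1 B1].
  destruct (schwartz1_R_Derive_n_bounded g 2 H) as [M2 B2].
  change (forall x, Rabs (g x) <= M0) in B0.
  change (forall x, Rabs (Derive g x) <= M1) in B1.
  change (forall x, Rabs (Derive (Derive g) x) <= M2) in B2.
  assert (Dg : forall c, is_derive g c (Derive g c)) by (intros; apply Derive_correct, (H 0%nat)).
  assert (Dg' : forall c, is_derive (Derive g) c (Derive (Derive g) c))
    by (intros; apply Derive_correct, (H 1%nat)).
  pose proof (Rle_abs M0). pose proof (Rle_abs M1). pose proof (Rle_abs M2).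
  pose proof (Rabs_pos M0). pose proof (Rabs_pos M1). pose proof (Rabs_pos M2).
  exists (Rabs M0 + Rabs M1 + Rabs M2). intros s t.
  pose proof (Rabs_pos (s - t)). pose proof (pow2_ge_0 (s - t)).
  pose proof (B0 s). pose proof (B1 s).
  pose proof (Rabs_diff_le_of_derive g (Derive g) t s M1 Dg B1).
  pose proof (Rabs_diff_le_of_derive (Derive g) (Derive (Derive g)) t s M2 Dg' B2).
  pose proof (Rabs_taylor_remainder_le g (Derive g) (Derive (Derive g)) t s M2 Dg Dg' B2).
  repeat split; nra.
Qed.

Lemma schwartz1_C2_bounds (h : R -> C) : schwartz1 h ->
  exists M, forall s t,
    Cmod (h s) <= M /\ Cmod (Cderiv h s) <= M /\ Cmod (Cminus (h s) (h t)) <= M * Rabs (s - t) /\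
    Cmod (Cminus (Cderiv h s) (Cderiv h t)) <= M * Rabs (s - t) /\
    Cmod (Cminus (Cminus (h s) (h t)) (Cmult (RtoC (s - t)) (Cderiv h t))) <= M * (s - t) ^ 2.
Proof.
  intros [H1 H2]. destruct (schwartz1_R_C2_bounds _ H1) as [M1 P1].
  destruct (schwartz1_R_C2_bounds _ H2) as [M2 P2].
  exists (M1 + M2). intros s t.
  destruct (P1 s t) as [A1 [A2 [A3 [A4 A5]]]]. destruct (P2 s t) as [B1 [B2 [B3 [B4 B5]]]].
  repeat split.
  - eapply Rle_trans; [apply Cmod_le_Rabs_sum | lra].
  - eapply Rle_trans; [apply Cmod_le_Rabs_sum | unfold Cderiv; simpl; lra].
  - eapply Rle_trans; [apply Cmod_minus_le_Rabs_sum | lra].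
  - eapply Rle_trans; [apply Cmod_minus_le_Rabs_sum | unfold Cderiv; simpl; lra].
  - eapply Rle_trans; [apply Cmod_le_Rabs_sum|]. unfold Cderiv, RtoC; simpl.
    set (d1 := Derive (fun t => fst (h t)) t) in *. set (d2 := Derive (fun t => snd (h t)) t) in *.
    replace (fst (h s) + - fst (h t) + - ((s - t) * d1 - 0 * d2))
      with (fst (h s) - fst (h t) - (s - t) * d1) by ring.
    replace (snd (h s) + - snd (h t) + - ((s - t) * d2 + 0 * d1))
      with (snd (h s) - snd (h t) - (s - t) * d2) by ring.
    lra.
Qed.

Lemma is_tempered_family_shift (h : R -> C) p0 : schwartz1 h ->
  is_tempered_family (fun p x => h (p - x 0%nat)) (fun p x => Cderiv h (p - x 0%nat)) p0.
Proof.
  intros Hh. destruct (schwartz1_C2_bounds h Hh) as [M HM].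
  assert (Hb : forall s, Cmod (h s) <= M /\ Cmod (Cderiv h s) <= M)
    by (intros s; destruct (HM s s) as (? & ? & _); now split).
  assert (Hl : forall s t, Cmod (Cminus (h s) (h t)) <= M * Rabs (s - t) /\
                           Cmod (Cminus (Cderiv h s) (Cderiv h t)) <= M * Rabs (s - t))
    by (intros s t; destruct (HM s t) as (_ & _ & ? & ? & _); now split).
  assert (HM0 : 0 <= M) by (destruct (Hb 0); pose proof (Cmod_ge_0 (h 0)); lra).
  assert (Hshift : forall x i y p,
            Rabs (p - x 0%nat - (p - set_coord x i y 0%nat)) <= Rabs (x i - y)).
  { intros x i y p. unfold set_coord. destruct (Nat.eqb_spec 0 i).
    - subst. rewrite <- Rabs_Ropp. right. f_equal. ring.
    - rewrite Rminus_eq_0, Rabs_R0. apply Rabs_pos. }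
  assert (Hlip : forall (F : R -> C) p x i y,
            (forall s t, Cmod (Cminus (F s) (F t)) <= M * Rabs (s - t)) ->
            Cmod (Cminus (F (p - x 0%nat)) (F (p - set_coord x i y 0%nat)))
              <= M * Rabs (x i - y) * 1).
  { intros F p x i y HF. rewrite Rmult_1_r. eapply Rle_trans; [apply HF|].
    apply Rmult_le_compat_l; auto. }
  exists M, 0%nat. simpl. split; [|split].
  - intros p _. split; split.
    + intros x. rewrite Rmult_1_r. apply Hb.
    + intros x i y _ _. apply Hlip. intros s t. apply Hl.
    + intros x. rewrite Rmult_1_r. apply Hb.
    + intros x i y _ _. apply Hlip. intros s t. apply Hl.
  - intros p q x _ _. rewrite Rmult_1_r. eapply Rle_trans; [apply Hl|].
    replace (p - x 0%nat - (q - x 0%nat)) with (p - q) by ring. lra.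
  - intros p q x _ _. rewrite Rmult_1_r.
    destruct (HM (p - x 0%nat) (q - x 0%nat)) as (_ & _ & _ & _ & H).
    replace (p - x 0%nat - (q - x 0%nat)) with (p - q) in H by ring. exact H.
Qed.

Lemma is_tempered_shift (h : R -> C) u : schwartz1 h ->
  is_tempered (fun x => h (u - x 0%nat)) /\ is_tempered (fun x => Cderiv h (u - x 0%nat)).
Proof.
  intros Hh. destruct (is_tempered_family_shift h u Hh) as [K [n [H _]]].
  destruct (H u) as [A B]; [rewrite Rminus_eq_0, Rabs_R0; lra|].
  split; exists K, n; assumption.
Qed.

Definition uncurry4 {T : Type} (g : fun4 T) : point -> T :=
  fun x => g (x 0%nat) (x 1%nat) (x 2%nat) (x 3%nat).

Lemma schwartz4_R_weighted_bound (g : fun4 R) ds n : schwartz4_R g ->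
  exists M, 0 <= M /\ forall x, Rabs (uncurry4 (iter_pd ds g) x) * bracket x ^ n <= M.
Proof.
  intros H. destruct (proj2 (H ds) n) as [M HM].
  exists (Rabs M). split; [apply Rabs_pos|]. intros x. rewrite Rmult_comm.
  eapply Rle_trans; [apply (HM (x 0%nat) (x 1%nat) (x 2%nat) (x 3%nat)) | apply Rle_abs].
Qed.

Lemma is_derive_set_coord (g : fun4 R) z i t : (i < 4)%nat ->
  (forall j a b c d, ex_pd j g a b c d) ->
  is_derive (fun s => uncurry4 g (set_coord z i s)) t (uncurry4 (pd i g) (set_coord z i t)).
Proof.
  intros Hi H. destruct i as [|[|[|[|i]]]]; try lia; unfold uncurry4, set_coord; simpl;
    apply Derive_correct; [apply (H 0%nat) | apply (H 1%nat) | apply (H 2%nat) | apply (H 3%nat)].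
Qed.

Lemma schwartz4_R_weighted_lipschitz (g : fun4 R) n : schwartz4_R g ->
  exists M, 0 <= M /\ forall x i y, (i < 4)%nat -> Rabs (x i - y) <= 1 ->
    Rabs (uncurry4 g x - uncurry4 g (set_coord x i y)) * bracket x ^ n <= M * Rabs (x i - y).
Proof.
  intros H.
  destruct (schwartz4_R_weighted_bound g (0%nat :: nil) n H) as [N0 [HN0 B0]].
  destruct (schwartz4_R_weighted_bound g (1%nat :: nil) n H) as [N1 [HN1 B1]].
  destruct (schwartz4_R_weighted_bound g (2%nat :: nil) n H) as [N2 [HN2 B2]].
  destruct (schwartz4_R_weighted_bound g (3%nat :: nil) n H) as [N3 [HN3 B3]].
  set (N := N0 + N1 + N2 + N3).
  assert (Hpd : forall i z, (i < 4)%nat -> Rabs (uncurry4 (pd i g) z) * bracket z ^ n <= N).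
  { intros i z Hi. unfold N.
    destruct i as [|[|[|[|i]]]]; try lia;
      [pose proof (B0 z) | pose proof (B1 z) | pose proof (B2 z) | pose proof (B3 z)];
      simpl in *; lra. }
  assert (H3 : 0 < 3 ^ n) by (apply pow_lt; lra).
  exists (3 ^ n * N). split; [unfold N; nra|]. intros x i y Hi Hy.
  destruct (MVT_cor4 _ _ (x i) (Rabs (y - x i))
              (fun c _ => is_derive_set_coord g x i c Hi (proj1 (H nil))) y (Rle_refl _))
    as [c [Hc Hca]].
  rewrite set_coord_id in Hc.
  rewrite <- Rabs_Ropp, Ropp_minus_distr, Hc, Rabs_mult, (Rabs_minus_sym y).
  assert (Hxc : Rabs (x i - c) <= 1) by (rewrite Rabs_minus_sym; rewrite Rabs_minus_sym in Hy; lra).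
  pose proof (Hpd i (set_coord x i c) Hi). pose proof (bracket_pow_le_set_coord x i c n Hi Hxc).
  pose proof (Rabs_pos (uncurry4 (pd i g) (set_coord x i c))). pose proof (Rabs_pos (x i - y)).
  pose proof (bracket_pow_pos x n). pose proof (bracket_pow_pos (set_coord x i c) n).
  assert (Rabs (uncurry4 (pd i g) (set_coord x i c)) * bracket x ^ n <= 3 ^ n * N)
    by (eapply Rle_trans; [apply Rmult_le_compat_l; eassumption | nra]).
  nra.
Qed.

Definition rapid_bound (k : point -> C) (n : nat) (B : R) : Prop :=
  forall x, Cmod (k x) * bracket x ^ n <= B /\
    forall i y, (i < 4)%nat -> Rabs (x i - y) <= 1 ->
      Cmod (Cminus (k x) (k (set_coord x i y))) * bracket x ^ n <= B * Rabs (x i - y).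

Definition rapidly_decreasing (k : point -> C) : Prop := forall n, exists B, rapid_bound k n B.

Lemma schwartz4_rapidly_decreasing (k : fun4 C) : schwartz4 k -> rapidly_decreasing (uncurry4 k).
Proof.
  intros [H1 H2] n.
  destruct (schwartz4_R_weighted_bound _ nil n H1) as [A1 [HA1 P1]].
  destruct (schwartz4_R_weighted_bound _ nil n H2) as [A2 [HA2 P2]].
  destruct (schwartz4_R_weighted_lipschitz _ n H1) as [L1 [HL1 Q1]].
  destruct (schwartz4_R_weighted_lipschitz _ n H2) as [L2 [HL2 Q2]].
  exists (A1 + A2 + (L1 + L2)). intros x. pose proof (bracket_pow_pos x n).
  pose proof (P1 x). pose proof (P2 x). simpl in *. unfold uncurry4 in *. split.
  - pose proof (Cmod_le_Rabs_sum (k (x 0%nat) (x 1%nat) (x 2%nat) (x 3%nat))). nra.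
  - intros i y Hi Hy. specialize (Q1 x i y Hi Hy). specialize (Q2 x i y Hi Hy).
    pose proof (Cmod_minus_le_Rabs_sum (k (x 0%nat) (x 1%nat) (x 2%nat) (x 3%nat))
      (k (set_coord x i y 0%nat) (set_coord x i y 1%nat)
         (set_coord x i y 2%nat) (set_coord x i y 3%nat))).
    pose proof (Rabs_pos (x i - y)). nra.
Qed.

Lemma rapid_bound_nonneg k n B : rapid_bound k n B -> 0 <= B.
Proof.
  intros H. destruct (H origin) as [H0 _].
  pose proof (Cmod_ge_0 (k origin)). pose proof (bracket_pow_pos origin n). nra.
Qed.

Lemma mul_le_of_weighted_le (a c w4 wn B K : R) : 0 <= a -> 0 <= c -> 0 < w4 -> 0 < wn ->
  a * (wn * w4) <= B -> c <= K * wn -> a * c * w4 <= B * K.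
Proof.
  intros Ha Hc Hw4 Hwn HaB HcK. assert (HK : 0 <= K) by nra.
  apply (Rle_trans _ (K * (a * (wn * w4)))); [|nra].
  replace (K * (a * (wn * w4))) with (a * (K * wn) * w4) by ring.
  apply Rmult_le_compat_r; [lra|]. now apply Rmult_le_compat_l.
Qed.

Lemma rapid_mul_tempered_le (k F : point -> C) K n B x :
  rapid_bound k (n + 4) B -> tempered F K n ->
  Cmod (Cmult (k x) (F x)) * bracket x ^ 4 <= B * K.
Proof.
  intros Hk HF. rewrite Cmod_mult.
  apply mul_le_of_weighted_le with (wn := bracket x ^ n); auto using Cmod_ge_0, bracket_pow_pos.
  - rewrite <- pow_add. apply Hk.
  - apply HF.
Qed.

Lemma rapid_mul_tempered_lipschitz (k F : point -> C) K n B x i y :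
  (i < 4)%nat -> Rabs (x i - y) <= 1 -> rapid_bound k (n + 4) B -> tempered F K n ->
  Cmod (Cminus (Cmult (k x) (F x)) (Cmult (k (set_coord x i y)) (F (set_coord x i y))))
    * bracket x ^ 4 <= (1 + 3 ^ (n + 4)) * B * K * Rabs (x i - y).
Proof.
  intros Hi Hy Hk HF.
  pose proof (bracket_pow_pos x 4). pose proof (bracket_pow_pos x n).
  pose proof (Rabs_pos (x i - y)). pose proof (rapid_bound_nonneg _ _ _ Hk).
  assert (E1 : Cmod (Cminus (k x) (k (set_coord x i y))) * Cmod (F x) * bracket x ^ 4
               <= B * Rabs (x i - y) * K).
  { apply mul_le_of_weighted_le with (wn := bracket x ^ n); auto using Cmod_ge_0.
    - rewrite <- pow_add. now apply Hk.
    - apply HF. }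
  assert (Hkz : Cmod (k (set_coord x i y)) * (bracket x ^ n * bracket x ^ 4) <= 3 ^ (n + 4) * B).
  { rewrite <- pow_add. pose proof (bracket_pow_le_set_coord x i y (n + 4) Hi Hy).
    pose proof (proj1 (Hk (set_coord x i y))). pose proof (Cmod_ge_0 (k (set_coord x i y))).
    pose proof (pow_lt 3 (n + 4) ltac:(lra)). nra. }
  assert (E2 : Cmod (k (set_coord x i y)) * Cmod (Cminus (F x) (F (set_coord x i y)))
                 * bracket x ^ 4
               <= 3 ^ (n + 4) * B * (K * Rabs (x i - y))).
  { apply mul_le_of_weighted_le with (wn := bracket x ^ n); auto using Cmod_ge_0.
    now apply HF. }
  eapply Rle_trans; [apply Rmult_le_compat_r; [lra | apply Cmod_Cmult_minus_le]|].
  rewrite Rmult_plus_distr_r. nra.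
Qed.

Lemma dominated_rapid_mul_tempered (k F : point -> C) K n B :
  rapid_bound k (n + 4) B -> tempered F K n ->
  dominated (V := CV) ((1 + 3 ^ (n + 4)) * B * K) full_mask (fun x => Cmult (k x) (F x)).
Proof.
  intros Hk HF. pose proof (rapid_bound_nonneg _ _ _ Hk). pose proof (tempered_nonneg _ _ _ HF).
  pose proof (pow_lt 3 (n + 4) ltac:(lra)).
  assert (HM : 0 <= (1 + 3 ^ (n + 4)) * B * K) by (apply Rmult_le_pos; [apply Rmult_le_pos|]; lra).
  split.
  - intros x. rewrite norm_CV. apply le_mul_mask_weight_full; [exact HM|].
    eapply Rle_trans; [apply (rapid_mul_tempered_le k F K n B x Hk HF)|].
    assert (0 <= B * K) by nra. nra.
  - intros x i y Hi Hy. rewrite norm_CV. pose proof (Rabs_pos (x i - y)).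
    pose proof (rapid_mul_tempered_lipschitz k F K n B x i y Hi Hy Hk HF) as Hlip.
    apply le_mul_mask_weight_full in Hlip; [|apply Rmult_le_pos; [exact HM | lra]].
    eapply Rle_trans; [exact Hlip|].
    apply Rmult_le_compat_l; [apply Rmult_le_pos; [exact HM | lra] | apply mask_weight_le_unmask].
Qed.

Lemma dominated_rapid_mul (k F : point -> C) : rapidly_decreasing k -> is_tempered F ->
  exists M, dominated (V := CV) M full_mask (fun x => Cmult (k x) (F x)).
Proof.
  intros Hk [K [n HF]]. destruct (Hk (n + 4)%nat) as [B HB].
  eexists. exact (dominated_rapid_mul_tempered k F K n B HB HF).
Qed.

Lemma dominated_family_rapid_mul (k : point -> C) (F F' : R -> point -> C) p0 :
  rapidly_decreasing k -> is_tempered_family F F' p0 ->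
  exists M, dominated_family (V := CV) M full_mask p0
    (fun p x => Cmult (k x) (F p x)) (fun p x => Cmult (k x) (F' p x)).
Proof.
  intros Hk [K [n HS]]. pose proof (tempered_family_nonneg _ _ _ _ _ HS).
  destruct HS as [S1 [_ S3]]. destruct (Hk (n + 4)%nat) as [B HB].
  pose proof (rapid_bound_nonneg _ _ _ HB). pose proof (pow_lt 3 (n + 4) ltac:(lra)).
  set (M := (1 + 3 ^ (n + 4)) * B * K).
  exists M. split.
  - intros p Hp. destruct (S1 p Hp). split; now apply dominated_rapid_mul_tempered.
  - intros p q x Hp Hq. rewrite taylor_remainder_C, norm_CV.
    replace (Cminus (Cminus (Cmult (k x) (F p x)) (Cmult (k x) (F q x)))
               (Cmult (RtoC (p - q)) (Cmult (k x) (F' q x))))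
      with (Cmult (k x) (Cminus (Cminus (F p x) (F q x)) (Cmult (RtoC (p - q)) (F' q x)))) by ring.
    pose proof (pow2_ge_0 (p - q)).
    assert (Hkx : Cmod (k x) * (bracket x ^ n * bracket x ^ 4) <= B)
      by (rewrite <- pow_add; apply HB).
    pose proof (mul_le_of_weighted_le _ _ _ _ _ _ (Cmod_ge_0 _) (Cmod_ge_0 _)
                  (bracket_pow_pos x 4) (bracket_pow_pos x n) Hkx (S3 p q x Hp Hq)) as Hmul.
    assert (HM : 0 <= M) by (unfold M; apply Rmult_le_pos; [apply Rmult_le_pos|]; lra).
    assert (HBK : B * (K * (p - q) ^ 2) <= M * (p - q) ^ 2).
    { rewrite <- Rmult_assoc. apply Rmult_le_compat_r; [lra|]. unfold M.
      assert (0 <= B * K) by nra. nra. }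
    apply le_mul_mask_weight_full; [now apply Rmult_le_pos|].
    rewrite Cmod_mult. eapply Rle_trans; [exact Hmul | exact HBK].
Qed.

Lemma integral4_rapid_mul_plus (k F G : point -> C) :
  rapidly_decreasing k -> is_tempered F -> is_tempered G ->
  integral4 (fun x => Cmult (k x) (Cplus (F x) (G x)))
  = Cplus (integral4 (fun x => Cmult (k x) (F x))) (integral4 (fun x => Cmult (k x) (G x))).
Proof.
  intros Hk HF HG. destruct (dominated_rapid_mul k F Hk HF) as [M HM].
  destruct (dominated_rapid_mul k G Hk HG) as [M' HM'].
  rewrite <- (integral4_plus M M' _ _ HM HM'). f_equal.
  apply functional_extensionality; intros x. ring.
Qed.

Lemma integral4_rapid_mul_scal (k F : point -> C) c :
  rapidly_decreasing k -> is_tempered F ->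
  integral4 (fun x => Cmult (k x) (Cmult c (F x)))
  = Cmult c (integral4 (fun x => Cmult (k x) (F x))).
Proof.
  intros Hk HF. destruct (dominated_rapid_mul k F Hk HF) as [M HM].
  rewrite <- (integral4_Cmult M _ c HM). f_equal.
  apply functional_extensionality; intros x. ring.
Qed.

(** * The group Fourier transform of B_4 *)

Definition phase (lam mu u : R) (x : point) : R :=
  mu / (2 * lam) * x 1%nat - lam * x 3%nat + lam * x 2%nat * (u - x 0%nat)
  - lam / 2 * x 1%nat * (u - x 0%nat) ^ 2.

Lemma is_tempered_phase lam mu u : is_tempered (fun x => RtoC (phase lam mu u x)).
Proof. unfold phase. solve_tempered. Qed.

Lemma is_tempered_family_phase_mu lam mu u :
  is_tempered_family (fun p x => RtoC (phase lam p u x)) (fun p x => RtoC (x 1%nat / (2 * lam))) mu.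
Proof.
  set (rest := fun x : point => RtoC (phase lam 0 u x)).
  assert (Hrest : is_tempered rest) by apply is_tempered_phase.
  assert (Hslope : is_tempered (fun x => RtoC (x 1%nat / (2 * lam)))) by solve_tempered.
  apply (is_tempered_family_ext _ _ _ _ _
           (is_tempered_family_plus _ _ _ _ _
              (is_tempered_family_mult _ _ _ _ _ (is_tempered_family_param mu)
                 (is_tempered_family_const _ mu Hslope))
              (is_tempered_family_const _ mu Hrest))).
  - intros p x. unfold rest, phase. C_ring.
  - intros p x. C_ring.
Qed.

Lemma is_tempered_family_phase_u lam mu u :
  is_tempered_family (fun p x => RtoC (phase lam mu p x))
    (fun p x => RtoC (lam * x 2%nat - lam * x 1%nat * (p - x 0%nat))) u.
Proof.
  assert (Hc : forall c : point -> R, is_tempered (fun x => RtoC (c x)) ->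
             is_tempered_family (fun _ x => RtoC (c x)) (fun _ _ => RtoC 0) u)
    by (intros c; apply is_tempered_family_const).
  pose proof (is_tempered_family_plus _ _ _ _ _ (is_tempered_family_param u)
                (Hc (fun x => - x 0%nat) ltac:(solve_tempered))) as Hshift.
  apply (is_tempered_family_ext _ _ _ _ _
    (is_tempered_family_plus _ _ _ _ _
       (is_tempered_family_plus _ _ _ _ _
          (Hc (fun x => mu / (2 * lam) * x 1%nat - lam * x 3%nat) ltac:(solve_tempered))
          (is_tempered_family_mult _ _ _ _ _
             (Hc (fun x => lam * x 2%nat) ltac:(solve_tempered)) Hshift))
       (is_tempered_family_mult _ _ _ _ _
          (Hc (fun x => - lam / 2 * x 1%nat) ltac:(solve_tempered))
          (is_tempered_family_mult _ _ _ _ _ Hshift Hshift)))).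
  - intros p x. unfold phase. C_ring.
  - intros p x. C_ring.
Qed.

Lemma piF_integral4 lam mu k h u :
  piF lam mu k h u
  = integral4 (fun x => Cmult (uncurry4 k x) (Cmult (cexpi (phase lam mu u x)) (h (u - x 0%nat)))).
Proof.
  transitivity (integral4 (fun x =>
    Cmult (Cmult (uncurry4 k x) (cexpi (phase lam mu u x))) (h (u - x 0%nat)))); [reflexivity|].
  f_equal. apply functional_extensionality; intros x. ring.
Qed.

Lemma DeltaX_integral4 j lam mu k h u : (j < 4)%nat ->
  DeltaX (S j) lam mu k h u
  = integral4 (fun x => Cmult (uncurry4 k x)
                 (Cmult (RtoC (x j)) (Cmult (cexpi (phase lam mu u x)) (h (u - x 0%nat))))).
Proof.
  intros Hj. unfold DeltaX. rewrite piF_integral4. f_equal.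
  apply functional_extensionality; intros x.
  unfold mulx, uncurry4. destruct j as [|[|[|[|j]]]]; try lia; ring.
Qed.

Lemma Cderiv_piF_mu lam mu kappa h u : schwartz4 kappa -> schwartz1 h ->
  Cderiv (fun m => piF lam m kappa h u) mu
  = Cmult (Cmult Ci (RtoC (/ (2 * lam)))) (DeltaX 2 lam mu kappa h u).
Proof.
  intros Hk Hh. pose proof (schwartz4_rapidly_decreasing _ Hk) as Dk.
  destruct (is_tempered_shift h u Hh) as [Ph _].
  pose proof (is_tempered_phase lam mu u) as Pphase.
  destruct (dominated_family_rapid_mul _ _ _ _ Dk
              (is_tempered_family_mult _ _ _ _ _
                 (is_tempered_family_cexpi _ _ _ (is_tempered_family_phase_mu lam mu u))
                 (is_tempered_family_const _ mu Ph))) as [M HM].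
  replace (fun m => piF lam m kappa h u) with (fun m => integral4 (fun x =>
      Cmult (uncurry4 kappa x) (Cmult (cexpi (phase lam m u x)) (h (u - x 0%nat)))))
    by (apply functional_extensionality; intros m; symmetry; apply piF_integral4).
  rewrite (Cderiv_integral4 _ _ _ _ HM), (DeltaX_integral4 1) by lia.
  rewrite <- integral4_rapid_mul_scal by (assumption || solve_tempered).
  f_equal. apply functional_extensionality; intros x. f_equal. C_ring.
Qed.

Lemma Cderiv_piF_u lam mu kappa h u : schwartz4 kappa -> schwartz1 h ->
  piX1 (piF lam mu kappa h) u
  = Cplus (Cplus (Cmult (Cmult Ci (RtoC lam)) (DeltaX 3 lam mu kappa h u))
                 (DeltaX 2 lam mu kappa (piX3 lam h) u))
          (piF lam mu kappa (piX1 h) u).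
Proof.
  intros Hk Hh. pose proof (schwartz4_rapidly_decreasing _ Hk) as Dk.
  destruct (is_tempered_shift h u Hh) as [Ph Ph'].
  pose proof (is_tempered_phase lam mu u) as Pphase.
  destruct (dominated_family_rapid_mul _ _ _ _ Dk
              (is_tempered_family_mult _ _ _ _ _
                 (is_tempered_family_cexpi _ _ _ (is_tempered_family_phase_u lam mu u))
                 (is_tempered_family_shift h u Hh))) as [M HM].
  unfold piX1 at 1.
  replace (piF lam mu kappa h) with (fun p => integral4 (fun x =>
      Cmult (uncurry4 kappa x) (Cmult (cexpi (phase lam mu p x)) (h (p - x 0%nat)))))
    by (apply functional_extensionality; intros p; symmetry; apply piF_integral4).
  rewrite (Cderiv_integral4 _ _ _ _ HM), (DeltaX_integral4 2), (DeltaX_integral4 1), piF_integral4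
    by lia.
  assert (Pshift3 : is_tempered (fun x => piX3 lam h (u - x 0%nat))).
  { apply (is_tempered_ext
             (fun x => Cmult (Cmult Ci (RtoC (- lam * (u - x 0%nat)))) (h (u - x 0%nat)))).
    - solve_tempered.
    - intros x. unfold piX3. C_ring. }
  rewrite <- integral4_rapid_mul_scal, <- !integral4_rapid_mul_plus
    by (assumption || solve_tempered).
  f_equal. apply functional_extensionality; intros x. f_equal. unfold piX1, piX3. C_ring.
Qed.

Theorem mainTheorem3 (lam mu : R) (kappa : fun4 C) (h : R -> C) (u : R) :
  lam <> 0 -> schwartz4 kappa -> schwartz1 h ->
  DeltaX 3 lam mu kappa h u =
    Cmult (Cdiv Ci (RtoC lam))
      (Cminus
        (Cplus (DeltaX 2 lam mu kappa (piX3 lam h) u)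
               (piF lam mu kappa (piX1 h) u))
        (piX1 (piF lam mu kappa h) u))
  /\ DeltaX 2 lam mu kappa h u =
     Cmult (Cdiv (RtoC (2 * lam)) Ci)
       (Cderiv (fun m => piF lam m kappa h u) mu).
Proof.
  intros Hlam Hk Hh. split.
  - rewrite (Cderiv_piF_u lam mu kappa h u Hk Hh).
    generalize (DeltaX 3 lam mu kappa h u), (DeltaX 2 lam mu kappa (piX3 lam h) u),
      (piF lam mu kappa (piX1 h) u).
    intros a b c. apply injective_projections; simpl; field; exact Hlam.
  - rewrite (Cderiv_piF_mu lam mu kappa h u Hk Hh).
    generalize (DeltaX 2 lam mu kappa h u). intros a.
    apply injective_projections; simpl; field; exact Hlam.
Qed.
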